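(* Let $\alpha\ge1$ and let $m_0\in W^{1,\infty}(0,\infty)$ be nonnegative, non-decreasing, with $m_0(0)=0$. For $h>0$ let $h_\rho=h$ and $h_t=\dfrac{h}{2\alpha\|(m_0)_\rho\|_\infty^{\alpha-1}\|m_0\|_\infty}$, let $M_j^n$ be given by scheme (M), and let $m^h$ be the continuous piecewise-linear interpolant of the values $M_j^n$ at the nodes $(t_n,\rho_j)=(nh_t,jh_\rho)$ on the triangulation of each cell $[t_n,t_{n+1}]\times[\rho_j,\rho_{j+1}]$ into two triangles along a diagonal. Then the family $\{m^h\}$ is uniformly Lipschitz continuous, and for every $T,P>0$, $m^h\to m$ uniformly on $[0,T]\times[0,P]$ as $h\to0$, where $m$ is the viscosity solution of the mass problem with datum $m_0$. Moreover $\|m(t,\cdot)\|_\infty=\lim_{\rho\to\infty}m(t,\rho)=\|m_0\|_\infty$ and $\|m_\rho(t,\cdot)\|_\infty\le\|(m_0)_\rho\|_\infty$ for all $t\ge0$.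
   Context: Scheme (M): with $H(s)=\big(\min\{s_+,\|(m_0)_\rho\|_\infty\}\big)^\alpha$, $M_j^0=m_0(\rho_j)$ ($j\ge0$), $M_0^n=0$ ($n>0$), $M_j^{n+1}=M_j^n\big/\big(1+h_tH\big(\frac{M_j^n-M_{j-1}^n}{h_\rho}\big)\big)$ for $j\ge1$, $n\ge0$. The mass problem is $m_t+(m_\rho)_+^\alpha m=0$ ($t,\rho>0$), $m(t,0)=0$, $m(0,\cdot)=m_0$; with Fréchet super/subdifferentials $D^\pm$, a continuous $m$ is a viscosity subsolution if $p_1+(p_2)_+^\alpha m\le0$ for all $(p_1,p_2)\in D^+m(t,\rho)$, $m(0,\cdot)\le m_0$, $m(t,0)\le0$; a supersolution with reversed inequalities and $D^-$; a viscosity solution if both (it is unique among bounded uniformly continuous functions). *)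

From Stdlib Require Import Reals Lra ZArith.
Open Scope R_scope.

(* real power with the convention 0^a = 0 (used only for a >= 1, or for a
   strictly positive base); Stdlib's Rpower gives Rpower 0 a = 1. *)
Definition rpow (x a : R) : R := if Rle_dec x 0 then 0 else Rpower x a.

(* H(s) = (min{s_+, L})^alpha, L = ||(m0)_rho||_oo *)
Definition Hfun (alpha Lm s : R) : R := rpow (Rmin (Rmax s 0) Lm) alpha.

Definition ht_of (alpha Lm Sm h : R) : R := h / (2 * alpha * rpow Lm (alpha - 1) * Sm).

(* Scheme (M): Mgrid ... n j = M_j^n *)
Fixpoint Mgrid (m0 : R -> R) (alpha Lm Sm h : R) (n : nat) {struct n} : nat -> R :=
  match n with
  | O => fun j => m0 (INR j * h)
  | S n' => fun j =>
      match j with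
      | O => 0
      | S j' =>
          Mgrid m0 alpha Lm Sm h n' (S j') /
          (1 + ht_of alpha Lm Sm h *
               Hfun alpha Lm ((Mgrid m0 alpha Lm Sm h n' (S j') - Mgrid m0 alpha Lm Sm h n' j') / h))
      end
  end.

(* Continuous piecewise-linear interpolant on [0,oo)^2.  Each cell
   [t_n,t_{n+1}] x [rho_j,rho_{j+1}] is split into two triangles along the
   diagonal (t_n,rho_j)-(t_{n+1},rho_{j+1}) if diag = true, and along the
   diagonal (t_{n+1},rho_j)-(t_n,rho_{j+1}) if diag = false. *)
Definition mh (m0 : R -> R) (alpha Lm Sm : R) (diag : bool) (h t rho : R) : R :=
  let ht := ht_of alpha Lm Sm h in
  let n := Z.to_nat (Int_part (t / ht)) in
  let j := Z.to_nat (Int_part (rho / h)) in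
  let s := t / ht - INR n in
  let r := rho / h - INR j in
  let M := Mgrid m0 alpha Lm Sm h in
  let a := M n j in
  let b := M (S n) j in
  let c := M n (S j) in
  let d := M (S n) (S j) in
  if diag then
    (if Rle_dec r s then a + s * (b - a) + r * (d - b)
     else a + r * (c - a) + s * (d - c))
  else
    (if Rle_dec (s + r) 1 then a + s * (b - a) + r * (c - a)
     else d + (1 - s) * (c - d) + (1 - r) * (b - d)).

Definition superdiff (m : R -> R -> R) (t rho p1 p2 : R) : Prop :=
  forall eps, 0 < eps -> exists delta, 0 < delta /\
    forall s y, 0 < s -> 0 < y ->
      sqrt ((s - t)^2 + (y - rho)^2) < delta ->
      m s y - m t rho - p1 * (s - t) - p2 * (y - rho)
        <= eps * sqrt ((s - t)^2 + (y - rho)^2).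

Definition subdiff (m : R -> R -> R) (t rho p1 p2 : R) : Prop :=
  forall eps, 0 < eps -> exists delta, 0 < delta /\
    forall s y, 0 < s -> 0 < y ->
      sqrt ((s - t)^2 + (y - rho)^2) < delta ->
      m s y - m t rho - p1 * (s - t) - p2 * (y - rho)
        >= - eps * sqrt ((s - t)^2 + (y - rho)^2).

Definition cont_quadrant (m : R -> R -> R) : Prop :=
  forall t rho, 0 <= t -> 0 <= rho -> forall eps, 0 < eps ->
    exists delta, 0 < delta /\ forall s y, 0 <= s -> 0 <= y ->
      Rabs (s - t) < delta -> Rabs (y - rho) < delta ->
      Rabs (m s y - m t rho) < eps.

Definition visc_sub (alpha : R) (m0 : R -> R) (m : R -> R -> R) : Prop :=
  cont_quadrant m /\
  (forall t rho p1 p2, 0 < t -> 0 < rho -> superdiff m t rho p1 p2 ->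
      p1 + rpow (Rmax p2 0) alpha * m t rho <= 0) /\
  (forall rho, 0 <= rho -> m 0 rho <= m0 rho) /\
  (forall t, 0 <= t -> m t 0 <= 0).

Definition visc_super (alpha : R) (m0 : R -> R) (m : R -> R -> R) : Prop :=
  cont_quadrant m /\
  (forall t rho p1 p2, 0 < t -> 0 < rho -> subdiff m t rho p1 p2 ->
      p1 + rpow (Rmax p2 0) alpha * m t rho >= 0) /\
  (forall rho, 0 <= rho -> m 0 rho >= m0 rho) /\
  (forall t, 0 <= t -> m t 0 >= 0).

Definition visc_sol (alpha : R) (m0 : R -> R) (m : R -> R -> R) : Prop :=
  visc_sub alpha m0 m /\ visc_super alpha m0 m.

Definition bounded_quadrant (m : R -> R -> R) : Prop :=
  exists B, forall t rho, 0 <= t -> 0 <= rho -> Rabs (m t rho) <= B.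

Definition unif_cont_quadrant (m : R -> R -> R) : Prop :=
  forall eps, 0 < eps -> exists delta, 0 < delta /\
    forall t rho s y, 0 <= t -> 0 <= rho -> 0 <= s -> 0 <= y ->
      Rabs (s - t) < delta -> Rabs (y - rho) < delta ->
      Rabs (m s y - m t rho) < eps.

From Stdlib Require Import Reals Lra Lia ZArith List ClassicalEpsilon.
Open Scope R_scope.

(** The proof follows the Barles–Souganidis strategy, made quantitative.

  - The Hamiltonian [H(s) = (min{s_+, L})^alpha] is non-decreasing, bounded
    by [L^alpha] and [alpha L^(alpha-1)]-Lipschitz.  With the CFL ratio
    [h_t/h = 1/(2 alpha L^(alpha-1) S)] the update map of the scheme is
    monotone in both arguments (lemma [update_monotone]).
  - Monotonicity yields discrete a priori bounds: [0 <= M <= S], time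
    decrements [<= h_t S L^alpha], space increments in [[0, L h]].  Hence
    the interpolants [m^h] are uniformly Lipschitz (gluing cell-wise
    Lipschitz bounds along the two axes).
  - A discrete doubling-of-variables argument compares the schemes for two
    mesh sizes [h, k] and shows that [(m^h)] is uniformly Cauchy on
    [[0,T] x [0,oo)].  Its limit [m] is Lipschitz, equals [m0] at [t = 0]
    and [0] at [rho = 0], and satisfies [m0(rho - t/cfl - 1) <= m(t,rho) <= S],
    which gives the behaviour as [rho -> oo].
  - Consistency: if a linear function touches [m] from above (resp. below)
    at an interior point, maximising [M - linear] on a small grid box yields
    a node where the discrete sub- (resp. super-) solution inequality holds
    up to small errors; hence [m] is a viscosity solution. *)

Lemma Rabs_le_bounds a b : Rabs a <= b -> - b <= a <= b.
Proof. intros H. pose proof (Rle_abs a). pose proof (Rle_abs (- a)). rewrite Rabs_Ropp in *. lra. Qed.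

Lemma abs_diff_le a b B : 0 <= a - b <= B -> Rabs (a - b) <= B.
Proof. intros. rewrite Rabs_right; lra. Qed.

Lemma div_nonneg t h : 0 <= t -> 0 < h -> 0 <= t / h.
Proof. intros; apply Rmult_le_pos; [lra|left; apply Rinv_0_lt_compat; lra]. Qed.

Lemma abs_shift a x : Rabs (a - x) - Rabs a <= Rabs x.
Proof.
  pose proof (Rabs_triang a (- x)). rewrite Rabs_Ropp in H. unfold Rminus. lra.
Qed.

Lemma Rabs_sign_diff s x y : Rabs s = 1 -> Rabs (s * x - s * y) = Rabs (x - y).
Proof. intros Hs. replace (s * x - s * y) with (s * (x - y)) by ring. rewrite Rabs_mult, Hs. ring. Qed.

Lemma mult_close_le x y H Hmax delta : 0 <= H <= Hmax -> Rabs (x - y) <= delta ->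
  x * H <= y * H + delta * Hmax.
Proof.
  intros [H0 H1] Hxy. pose proof (Rabs_pos (x - y)). apply Rabs_le_bounds in Hxy.
  destruct (Rle_dec x y); [nra|].
  assert ((x - y) * H <= delta * Hmax) by (apply Rmult_le_compat; lra). lra.
Qed.

Lemma sqrt_le_l1 a b : sqrt (a ^ 2 + b ^ 2) <= Rabs a + Rabs b.
Proof.
  pose proof (Rabs_pos a). pose proof (Rabs_pos b).
  rewrite <- (sqrt_pow2 (Rabs a + Rabs b)) by lra. apply sqrt_le_1_alt.
  rewrite <- (pow2_abs a), <- (pow2_abs b). nra.
Qed.

Lemma sqrt_one_dir a : sqrt (0 ^ 2 + a ^ 2) = Rabs a.
Proof.
  rewrite <- (pow2_abs a). replace (0 ^ 2 + Rabs a ^ 2) with (Rabs a ^ 2) by ring.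
  apply sqrt_pow2, Rabs_pos.
Qed.

Lemma div_ge1_le a D : 0 <= a -> 1 <= D -> a / D <= a.
Proof.
  intros. unfold Rdiv. apply Rle_trans with (a * 1); [|lra].
  apply Rmult_le_compat_l; [lra|]. rewrite <- Rinv_1. apply Rinv_le_contravar; lra.
Qed.

(** Used to make an error [C x] smaller than [B] by taking [x <= B / (C + 1)]. *)
Lemma mul_div_succ_le C B : 0 <= C -> 0 <= B -> C * (B / (C + 1)) <= B.
Proof.
  intros HC HB. apply Rmult_le_reg_r with (C + 1); [lra|].
  replace (C * (B / (C + 1)) * (C + 1)) with (C * B) by (field; lra). nra.
Qed.

Lemma small_mesh c d r C B : 0 <= c -> 0 < d -> 0 < r -> 0 <= C -> 0 < B ->
  exists h, 0 < h < d /\ c * h <= r / 2 /\ h <= r / 2 /\ C * h <= B.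
Proof.
  intros Hc Hd Hr HC HB.
  exists (Rmin (d / 2) (Rmin (r / 2 / (c + 1)) (B / (C + 1)))).
  pose proof (Rmin_l (d / 2) (Rmin (r / 2 / (c + 1)) (B / (C + 1)))).
  pose proof (Rmin_r (d / 2) (Rmin (r / 2 / (c + 1)) (B / (C + 1)))).
  pose proof (Rmin_l (r / 2 / (c + 1)) (B / (C + 1))).
  pose proof (Rmin_r (r / 2 / (c + 1)) (B / (C + 1))).
  set (h := Rmin (d / 2) (Rmin (r / 2 / (c + 1)) (B / (C + 1)))) in *.
  assert (0 < h).
  { unfold h. repeat apply Rmin_glb_lt; try lra; apply Rmult_lt_0_compat; try lra;
      apply Rinv_0_lt_compat; lra. }
  pose proof (mul_div_succ_le c (r / 2) Hc ltac:(lra)).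
  pose proof (mul_div_succ_le C B HC ltac:(lra)).
  pose proof (div_ge1_le (r / 2) (c + 1) ltac:(lra) ltac:(lra)).
  assert (c * h <= c * (r / 2 / (c + 1))) by (apply Rmult_le_compat_l; lra).
  assert (C * h <= C * (B / (C + 1))) by (apply Rmult_le_compat_l; lra).
  repeat split; lra.
Qed.

(** ** Real powers and the Hamiltonian *)

Lemma Rpower_pos x a : 0 < Rpower x a.
Proof. unfold Rpower; apply exp_pos. Qed.

Lemma rpow_pos_eq x a : 0 < x -> rpow x a = Rpower x a.
Proof. intros; unfold rpow; destruct (Rle_dec x 0); lra. Qed.

Lemma rpow_nonpos x a : x <= 0 -> rpow x a = 0.
Proof. intros; unfold rpow; destruct (Rle_dec x 0); lra. Qed.

Lemma rpow_nonneg x a : 0 <= rpow x a.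
Proof. unfold rpow; destruct (Rle_dec x 0); [lra|]. left; apply Rpower_pos. Qed.

Section Hamiltonian.
Variables (alpha L : R).
Hypothesis alpha_ge1 : 1 <= alpha.
Hypothesis L_pos : 0 < L.

(** On [[0, L]] the power [x^alpha] is non-decreasing with slope at most
    [alpha L^(alpha-1)] (mean value theorem). *)
Lemma rpow_incr_lipschitz x y : 0 <= x -> x <= y -> y <= L ->
  0 <= rpow y alpha - rpow x alpha <= alpha * Rpower L (alpha - 1) * (y - x).
Proof.
  intros Hx Hxy HyL.
  assert (HLp : 0 < Rpower L (alpha - 1)) by apply Rpower_pos.
  destruct (Req_dec x y) as [->|Nxy]; [split; nra|].
  destruct (Req_dec x 0) as [->|Nx].
  - assert (Hy : 0 < y) by lra.
    rewrite (rpow_nonpos 0), rpow_pos_eq by lra.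
    replace (Rpower y alpha) with (y * Rpower y (alpha - 1)).
    2:{ replace alpha with (1 + (alpha - 1)) at 2 by ring.
        rewrite Rpower_plus, Rpower_1 by lra. ring. }
    assert (Rpower y (alpha - 1) <= Rpower L (alpha - 1)) by (apply Rle_Rpower_l; lra).
    pose proof (Rpower_pos y (alpha - 1)).
    assert (y * Rpower y (alpha - 1) <= y * Rpower L (alpha - 1)) by (apply Rmult_le_compat_l; lra).
    assert (0 <= (alpha - 1) * (Rpower L (alpha - 1) * y)) by (apply Rmult_le_pos; nra).
    split; nra.
  - rewrite !rpow_pos_eq by lra.
    destruct (MVT_cor2 (fun z => Rpower z alpha) (fun z => alpha * Rpower z (alpha - 1)) x y)
      as [c [Hc1 Hc2]]; [lra| |].
    { intros c Hc. apply derivable_pt_lim_power. lra. }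
    simpl in Hc1. rewrite Hc1.
    assert (Rpower c (alpha - 1) <= Rpower L (alpha - 1)) by (apply Rle_Rpower_l; lra).
    pose proof (Rpower_pos c (alpha - 1)).
    split; [apply Rmult_le_pos; nra|].
    apply Rmult_le_compat_r; [lra|]. apply Rmult_le_compat_l; lra.
Qed.

Lemma clamp_incr s s' : s <= s' ->
  0 <= Rmin (Rmax s 0) L <= L /\ 0 <= Rmin (Rmax s' 0) L <= L /\
  0 <= Rmin (Rmax s' 0) L - Rmin (Rmax s 0) L <= s' - s.
Proof. intros; unfold Rmin, Rmax; repeat destruct Rle_dec; lra. Qed.

Lemma Hfun_lipschitz s s' : s <= s' ->
  0 <= Hfun alpha L s' - Hfun alpha L s <= alpha * Rpower L (alpha - 1) * (s' - s).
Proof.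
  intros Hs. unfold Hfun.
  destruct (clamp_incr s s' Hs) as [C1 [C2 C3]].
  pose proof (rpow_incr_lipschitz (Rmin (Rmax s 0) L) (Rmin (Rmax s' 0) L)) as R.
  assert (0 < alpha * Rpower L (alpha - 1)) by (pose proof (Rpower_pos L (alpha - 1)); nra).
  split; [apply R; lra|]. destruct R as [_ R]; lra || nra.
Qed.

Lemma Hfun_nonneg s : 0 <= Hfun alpha L s.
Proof. apply rpow_nonneg. Qed.

Lemma Hfun_le s : Hfun alpha L s <= Rpower L alpha.
Proof.
  assert (Hfun alpha L (Rmax s L) = Rpower L alpha).
  { unfold Hfun. rewrite <- (rpow_pos_eq L) by lra. f_equal.
    unfold Rmin, Rmax; repeat destruct Rle_dec; lra. }
  pose proof (Hfun_lipschitz s (Rmax s L) (Rmax_l s L)). lra.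
Qed.

Lemma Hfun_0 : Hfun alpha L 0 = 0.
Proof. unfold Hfun. apply rpow_nonpos. unfold Rmin, Rmax; repeat destruct Rle_dec; lra. Qed.

(** Below the cut-off [L], [H] is the Hamiltonian [(s_+)^alpha] of the PDE. *)
Lemma Hfun_eq s : s <= L -> Hfun alpha L s = rpow (Rmax s 0) alpha.
Proof. intros; unfold Hfun; f_equal; unfold Rmin, Rmax; repeat destruct Rle_dec; lra. Qed.
End Hamiltonian.

Definition nfloor (r : R) : nat := Z.to_nat (Int_part r).

Lemma nfloor_spec r : 0 <= r -> INR (nfloor r) <= r < INR (nfloor r) + 1.
Proof.
  intros Hr. unfold nfloor. destruct (base_Int_part r) as [H1 H2].
  assert (Hz : (0 <= Int_part r)%Z).
  { assert (-1 < IZR (Int_part r)) by lra. apply lt_IZR in H. lia. }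
  rewrite INR_IZR_INZ, Z2Nat.id by auto. lra.
Qed.

Lemma nfloor_unique r n : INR n <= r < INR n + 1 -> nfloor r = n.
Proof.
  intros [H1 H2]. unfold nfloor. rewrite <- (Int_part_spec r (Z.of_nat n)).
  - apply Nat2Z.id.
  - rewrite <- INR_IZR_INZ. lra.
Qed.

Lemma nfloor_INR n : nfloor (INR n) = n.
Proof. apply nfloor_unique. lra. Qed.

Lemma nfloor_zero x : nfloor (0 / x) = 0%nat.
Proof. unfold Rdiv. rewrite Rmult_0_l. apply (nfloor_INR 0). Qed.

Lemma frac_range r : 0 <= r -> 0 <= r - INR (nfloor r) < 1.
Proof. intros Hr; pose proof (nfloor_spec r Hr); lra. Qed.

Lemma nfloor_cell tau t : 0 < tau -> 0 <= t ->
  INR (nfloor (t / tau)) * tau <= t < INR (nfloor (t / tau)) * tau + tau.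
Proof.
  intros Htau Ht. assert (0 <= t / tau) by (apply Rmult_le_pos; [lra|left; apply Rinv_0_lt_compat; lra]).
  pose proof (nfloor_spec _ H) as [S1 S2].
  assert (E : t / tau * tau = t) by (field; lra).
  apply (Rmult_le_compat_r tau) in S1; [|lra]. apply (Rmult_lt_compat_r tau) in S2; [|lra].
  rewrite E in S1, S2. lra.
Qed.

(** ** Lipschitz bounds for piecewise linear functions *)

Lemma two_piece_lipschitz (f : R -> R) q a1 b1 a2 b2 B :
  (forall s, s <= q -> f s = a2 + b2 * s) ->
  (forall s, q <= s -> f s = a1 + b1 * s) ->
  Rabs b1 <= B -> Rabs b2 <= B ->
  forall s s', Rabs (f s - f s') <= B * Rabs (s - s').
Proof.
  intros H2 H1 Hb1 Hb2.
  assert (Hq : a1 + b1 * q = a2 + b2 * q) by (rewrite <- H1, <- H2; lra).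
  assert (HB : 0 <= B) by (pose proof (Rabs_pos b1); lra).
  assert (key : forall s s', s <= s' -> Rabs (f s - f s') <= B * (s' - s)).
  { intros s s' Hss. apply Rabs_le.
    apply Rabs_le_bounds in Hb1; apply Rabs_le_bounds in Hb2.
    destruct (Rle_lt_dec s' q); [rewrite !H2 by lra; split; nra|].
    destruct (Rle_lt_dec q s); [rewrite !H1 by lra; split; nra|].
    rewrite (H2 s), (H1 s') by lra. split; nra. }
  intros s s'. destruct (Rle_lt_dec s s').
  - rewrite (Rabs_minus_sym s s'), (Rabs_right (s' - s)) by lra. apply key; lra.
  - rewrite (Rabs_right (s - s')), Rabs_minus_sym by lra. apply key; lra.
Qed.

Section Gluing.
Variables (tau K : R) (g : nat -> R -> R).
Hypothesis tau_pos : 0 < tau.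
Hypothesis g_lip : forall n s s', 0 <= s <= 1 -> 0 <= s' <= 1 ->
  Rabs (g n s - g n s') <= K * tau * Rabs (s - s').
Hypothesis g_match : forall n, g n 1 = g (S n) 0.

Definition glue t := g (nfloor (t / tau)) (t / tau - INR (nfloor (t / tau))).

Lemma glue_cell n t : INR n * tau <= t <= INR n * tau + tau -> glue t = g n (t / tau - INR n).
Proof.
  intros [H1 H2]. unfold glue.
  assert (E : INR n <= t / tau <= INR n + 1).
  { split; apply Rmult_le_reg_r with tau; auto; unfold Rdiv;
      rewrite Rmult_assoc, Rinv_l, Rmult_1_r; lra. }
  destruct (Rlt_dec (t / tau) (INR n + 1)).
  - rewrite (nfloor_unique (t / tau) n) by lra. reflexivity.
  - assert (Hs : t / tau = INR (S n)) by (rewrite S_INR; lra).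
    rewrite Hs, nfloor_INR, Rminus_diag, <- g_match, S_INR. f_equal. ring.
Qed.

Lemma glue_same_cell n t t' : INR n * tau <= t <= INR n * tau + tau ->
  INR n * tau <= t' <= INR n * tau + tau -> Rabs (glue t - glue t') <= K * Rabs (t - t').
Proof.
  intros H1 H2. rewrite (glue_cell n t H1), (glue_cell n t' H2).
  assert (loc : forall u, INR n * tau <= u <= INR n * tau + tau -> 0 <= u / tau - INR n <= 1).
  { intros u Hu. assert (INR n <= u / tau <= INR n + 1); [|lra].
    split; apply Rmult_le_reg_r with tau; auto; unfold Rdiv;
      rewrite Rmult_assoc, Rinv_l, Rmult_1_r; lra. }
  eapply Rle_trans; [apply g_lip; apply loc; lra|].
  replace (t / tau - INR n - (t' / tau - INR n)) with ((t - t') / tau) by (field; lra).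
  unfold Rdiv. rewrite Rabs_mult, (Rabs_right (/ tau)) by (left; apply Rinv_0_lt_compat; auto).
  right. field. lra.
Qed.

Lemma glue_lipschitz_cells d : forall t t', 0 <= t -> t <= t' ->
  nfloor (t' / tau) = (nfloor (t / tau) + d)%nat ->
  Rabs (glue t - glue t') <= K * Rabs (t - t').
Proof.
  induction d; intros t t' Ht Htt' Hfl.
  - rewrite Nat.add_0_r in Hfl. apply (glue_same_cell (nfloor (t / tau))).
    + pose proof (nfloor_cell tau t tau_pos Ht); lra.
    + rewrite <- Hfl. pose proof (nfloor_cell tau t' tau_pos ltac:(lra)); lra.
  - set (n := nfloor (t / tau)) in *.
    set (p := INR (S n) * tau).
    pose proof (nfloor_cell tau t tau_pos Ht) as [C1 C2]. fold n in C1, C2.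
    pose proof (nfloor_cell tau t' tau_pos ltac:(lra)) as [C3 _]. rewrite Hfl in C3.
    assert (Hp1 : t <= p) by (unfold p; rewrite S_INR; lra).
    assert (Hp2 : p <= t').
    { eapply Rle_trans; [|apply C3]. apply Rmult_le_compat_r; [lra|]. apply le_INR. lia. }
    assert (Hpfl : nfloor (p / tau) = S n)
      by (unfold p, Rdiv; rewrite Rmult_assoc, Rinv_r, Rmult_1_r by lra; apply nfloor_INR).
    assert (A1 : Rabs (glue t - glue p) <= K * Rabs (t - p))
      by (apply (glue_same_cell n); unfold p; rewrite ?S_INR; lra).
    assert (A2 : Rabs (glue p - glue t') <= K * Rabs (p - t'))
      by (apply IHd; [lra|lra|]; rewrite Hpfl, Hfl; lia).
    replace (glue t - glue t') with ((glue t - glue p) + (glue p - glue t')) by ring.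
    eapply Rle_trans; [apply Rabs_triang|].
    rewrite (Rabs_left1 (t - t')), (Rabs_left1 (t - p)), (Rabs_left1 (p - t')) in * by lra.
    lra.
Qed.

Lemma glue_lipschitz t t' : 0 <= t -> 0 <= t' -> Rabs (glue t - glue t') <= K * Rabs (t - t').
Proof.
  assert (key : forall u u', 0 <= u -> u <= u' -> Rabs (glue u - glue u') <= K * Rabs (u - u')).
  { intros u u' Hu Huu'.
    apply (glue_lipschitz_cells (nfloor (u' / tau) - nfloor (u / tau))); auto.
    assert (nfloor (u / tau) <= nfloor (u' / tau))%nat; [|lia].
    pose proof (nfloor_cell tau u tau_pos Hu). pose proof (nfloor_cell tau u' tau_pos ltac:(lra)).
    destruct (le_lt_dec (nfloor (u / tau)) (nfloor (u' / tau))) as [|Hlt]; auto.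
    assert (INR (S (nfloor (u' / tau))) <= INR (nfloor (u / tau))) by (apply le_INR; lia).
    rewrite S_INR in *. nra. }
  intros Ht Ht'. destruct (Rle_lt_dec t t'); [apply key; auto|].
  rewrite Rabs_minus_sym, (Rabs_minus_sym t). apply key; lra.
Qed.
End Gluing.

Lemma list_argmax {A : Type} (l : list A) (P : A -> Prop) (g : A -> R)
  (P_dec : forall x, {P x} + {~ P x}) x0 :
  In x0 l -> P x0 -> exists x, In x l /\ P x /\ forall y, In y l -> P y -> g y <= g x.
Proof.
  revert x0. induction l as [|a l IH]; intros x0 Hin Hx0; [contradiction|].
  destruct (P_dec a) as [Pa|nPa].
  - destruct (classic (exists y, In y l /\ P y)) as [[y [Hy Py]]|Hno].
    + destruct (IH y Hy Py) as [x [Hx [Px Hmax]]].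
      destruct (Rle_dec (g a) (g x)).
      * exists x. split; [right; auto|split; auto]. intros z [<-|Hz] Pz; auto.
      * exists a. split; [left; auto|split; auto]. intros z [<-|Hz] Pz; [lra|].
        specialize (Hmax z Hz Pz). lra.
    + exists a. split; [left; auto|split; auto]. intros z [<-|Hz] Pz; [lra|].
      exfalso. apply Hno. eauto.
  - destruct Hin as [<-|Hin]; [contradiction|].
    destruct (IH x0 Hin Hx0) as [x [Hx [Px Hmax]]].
    exists x. split; [right; auto|split; auto]. intros z [<-|Hz] Pz; [contradiction|auto].
Qed.

Definition grid (N J : nat) : list (nat * nat) := list_prod (seq 0 (S N)) (seq 0 (S J)).

Lemma in_grid N J n j : In (n, j) (grid N J) <-> (n <= N /\ j <= J)%nat.
Proof. unfold grid. rewrite in_prod_iff, !in_seq. lia. Qed.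

(** ** Touching a function from above on a grid *)

(** We maximise the
    penalised grid function [U - (linear + 2 eps |x - x0|_1)] over the nodes
    of the box below [x0]. *)
Section Touching.
Variables (u : R -> R -> R) (U : nat -> nat -> R) (K tau h t0 rho0 p1 p2 eps r eta : R).
Hypothesis tau_pos : 0 < tau.
Hypothesis h_pos : 0 < h.
Hypothesis eps_pos : 0 < eps.
Hypothesis K_nonneg : 0 <= K.
Hypothesis r_le_t0 : r <= t0.
Hypothesis r_le_rho0 : r <= rho0.
Hypothesis tau_small : tau <= r / 2.
Hypothesis h_small : h <= r / 2.
Hypothesis errors_small :
  (K + Rabs p1 + 2 * eps) * tau + (K + Rabs p2 + 2 * eps) * h + 2 * eta <= eps * r / 4.
Hypothesis u_lip : forall n j, Rabs (u (INR n * tau) (INR j * h) - u t0 rho0)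
  <= K * (Rabs (INR n * tau - t0) + Rabs (INR j * h - rho0)).
Hypothesis u_touch : forall t rho, Rabs (t - t0) <= r -> Rabs (rho - rho0) <= r ->
  u t rho <= u t0 rho0 + p1 * (t - t0) + p2 * (rho - rho0) + eps * (Rabs (t - t0) + Rabs (rho - rho0)).
Hypothesis U_approx : forall n j, Rabs (INR n * tau - t0) <= r -> Rabs (INR j * h - rho0) <= r ->
  Rabs (U n j - u (INR n * tau) (INR j * h)) <= eta.

Definition node_dist n j := Rabs (INR n * tau - t0) + Rabs (INR j * h - rho0).

Definition in_box n j := Rabs (INR n * tau - t0) <= r /\ Rabs (INR j * h - rho0) <= r.

Definition penalised n j :=
  U n j - (p1 * (INR n * tau - t0) + p2 * (INR j * h - rho0) + 2 * eps * node_dist n j).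

Definition n_base := nfloor (t0 / tau).
Definition j_base := nfloor (rho0 / h).

Lemma base_cell : INR n_base * tau <= t0 < INR n_base * tau + tau /\
  INR j_base * h <= rho0 < INR j_base * h + h.
Proof. split; apply nfloor_cell; lra. Qed.

Lemma penalised_argmax : exists n j, in_box n j /\ penalised n_base j_base <= penalised n j /\
  forall a b, (a <= n)%nat -> (b <= j)%nat -> in_box a b -> penalised a b <= penalised n j.
Proof.
  pose proof base_cell as [C1 C2].
  assert (Hbase : in_box n_base j_base) by (split; apply Rabs_le; lra).
  destruct (list_argmax (grid n_base j_base) (fun nj => in_box (fst nj) (snd nj))
    (fun nj => penalised (fst nj) (snd nj))) with (x0 := (n_base, j_base))
    as [[n j] [Hin [Hbox Hmax]]]; [|apply in_grid; lia|exact Hbase|].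
  { intros [a b]. unfold in_box; simpl.
    destruct (Rle_dec (Rabs (INR a * tau - t0)) r); [|right; tauto].
    destruct (Rle_dec (Rabs (INR b * h - rho0)) r); [left; auto|right; tauto]. }
  apply in_grid in Hin. exists n, j. split; [exact Hbox|split].
  - apply (Hmax (n_base, j_base)); [apply in_grid; lia|exact Hbase].
  - intros a b Ha Hb Hab. apply (Hmax (a, b)); [apply in_grid; lia|exact Hab].
Qed.

Lemma penalised_max_close n j : in_box n j -> penalised n_base j_base <= penalised n j ->
  eps * node_dist n j <= (K + Rabs p1 + 2 * eps) * tau + (K + Rabs p2 + 2 * eps) * h + 2 * eta.
Proof.
  intros [Bn Bj] M. pose proof base_cell as [C1 C2].
  assert (Hbase : in_box n_base j_base) by (split; apply Rabs_le; lra).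
  pose proof (U_approx n_base j_base (proj1 Hbase) (proj2 Hbase)) as A0.
  pose proof (U_approx n j Bn Bj) as A1.
  pose proof (u_touch _ _ Bn Bj) as T1. pose proof (u_lip n_base j_base) as L0.
  unfold penalised, node_dist in *.
  rewrite (Rabs_left1 (INR n_base * tau - t0)), (Rabs_left1 (INR j_base * h - rho0)) in * by lra.
  apply Rabs_le_bounds in A0, A1, L0.
  pose proof (Rle_abs p1). pose proof (Rle_abs (- p1)). pose proof (Rle_abs p2).
  pose proof (Rle_abs (- p2)). rewrite Rabs_Ropp in *.
  assert (Rabs p1 * (t0 - INR n_base * tau) <= Rabs p1 * tau) by (apply Rmult_le_compat_l; lra).
  assert (Rabs p2 * (rho0 - INR j_base * h) <= Rabs p2 * h) by (apply Rmult_le_compat_l; lra).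
  assert (K * (- (INR n_base * tau - t0) + - (INR j_base * h - rho0)) <= K * (tau + h))
    by (apply Rmult_le_compat_l; lra).
  nra.
Qed.

Lemma penalty_step a d : 0 <= d -> 2 * eps * (Rabs (a - d) - Rabs a) <= 2 * eps * d.
Proof.
  intros Hd. pose proof (abs_shift a d). rewrite (Rabs_right d) in H by lra.
  apply Rmult_le_compat_l; lra.
Qed.

Lemma discrete_touching : exists n j d, 0 <= d /\
    eps * d <= (K + Rabs p1 + 2 * eps) * tau + (K + Rabs p2 + 2 * eps) * h + 2 * eta /\
    Rabs (U (S n) (S j) - u t0 rho0) <= K * d + eta /\
    U n (S j) <= U (S n) (S j) - p1 * tau + 2 * eps * tau /\
    U n j <= U (S n) (S j) - p1 * tau - p2 * h + 2 * eps * (tau + h).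
Proof.
  destruct penalised_argmax as [n [j [[Bn Bj] [Mbase Hmax]]]].
  pose proof (penalised_max_close n j (conj Bn Bj) Mbase) as Hclose.
  assert (Hd4 : node_dist n j <= r / 4) by (apply Rmult_le_reg_l with eps; lra).
  unfold node_dist in Hd4. pose proof (Rabs_pos (INR n * tau - t0)).
  pose proof (Rabs_pos (INR j * h - rho0)).
  assert (Hn : Rabs (INR n * tau - t0) <= r / 4) by lra.
  assert (Hj : Rabs (INR j * h - rho0) <= r / 4) by lra.
  apply Rabs_le_bounds in Hn, Hj.
  (* the maximiser is not on the axes, since it lies within [r/4] of [x0] *)
  destruct n as [|n]; [simpl in Hn; lra|]. destruct j as [|j]; [simpl in Hj; lra|].
  exists n, j, (node_dist (S n) (S j)).
  split; [unfold node_dist; lra|]. split; [exact Hclose|].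
  pose proof (U_approx (S n) (S j) Bn Bj) as A1. pose proof (u_lip (S n) (S j)) as L1.
  split.
  { apply Rabs_le_bounds in A1, L1. unfold node_dist. apply Rabs_le. lra. }
  rewrite S_INR in *.
  assert (Bn' : Rabs (INR n * tau - t0) <= r) by (apply Rabs_le; lra).
  assert (Bj' : Rabs (INR j * h - rho0) <= r) by (apply Rabs_le; lra).
  assert (In1 : in_box n (S j)) by (split; [|rewrite S_INR]; assumption).
  pose proof (Hmax n (S j) ltac:(lia) ltac:(lia) In1) as M1.
  pose proof (Hmax n j ltac:(lia) ltac:(lia) (conj Bn' Bj')) as M2.
  unfold penalised, node_dist in M1, M2. rewrite !S_INR in M1, M2.
  pose proof (penalty_step ((INR n + 1) * tau - t0) tau ltac:(lra)) as S1.
  pose proof (penalty_step ((INR j + 1) * h - rho0) h ltac:(lra)) as S2.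
  replace ((INR n + 1) * tau - t0 - tau) with (INR n * tau - t0) in S1 by ring.
  replace ((INR j + 1) * h - rho0 - h) with (INR j * h - rho0) in S2 by ring.
  lra.
Qed.
End Touching.

(** ** Fréchet super- and subdifferentials *)

Lemma superdiff_box (m : R -> R -> R) t0 rho0 p1 p2 eps : 0 < t0 -> 0 < rho0 -> 0 < eps ->
  superdiff m t0 rho0 p1 p2 -> exists r, 0 < r /\ r <= t0 / 2 /\ r <= rho0 / 2 /\
  forall t rho, Rabs (t - t0) <= r -> Rabs (rho - rho0) <= r ->
    m t rho <= m t0 rho0 + p1 * (t - t0) + p2 * (rho - rho0) + eps * (Rabs (t - t0) + Rabs (rho - rho0)).
Proof.
  intros Ht0 Hr0 He Hsd. destruct (Hsd eps He) as [dl [Hdl Hloc]].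
  exists (Rmin (dl / 4) (Rmin (t0 / 2) (rho0 / 2))).
  pose proof (Rmin_l (dl / 4) (Rmin (t0 / 2) (rho0 / 2))).
  pose proof (Rmin_r (dl / 4) (Rmin (t0 / 2) (rho0 / 2))).
  pose proof (Rmin_l (t0 / 2) (rho0 / 2)). pose proof (Rmin_r (t0 / 2) (rho0 / 2)).
  set (r := Rmin (dl / 4) (Rmin (t0 / 2) (rho0 / 2))) in *.
  assert (0 < r) by (unfold r; repeat apply Rmin_glb_lt; lra).
  repeat split; try lra.
  intros t rho Bt Brho. pose proof (sqrt_le_l1 (t - t0) (rho - rho0)).
  pose proof (Rabs_pos (t - t0)). pose proof (Rabs_pos (rho - rho0)).
  pose proof (Rabs_le_bounds _ _ Bt). pose proof (Rabs_le_bounds _ _ Brho).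
  specialize (Hloc t rho ltac:(lra) ltac:(lra) ltac:(lra)).
  assert (eps * sqrt ((t - t0) ^ 2 + (rho - rho0) ^ 2) <= eps * (Rabs (t - t0) + Rabs (rho - rho0)))
    by (apply Rmult_le_compat_l; lra).
  lra.
Qed.

(** A subdifferential of [m] is a superdifferential of [-m]. *)
Lemma subdiff_box (m : R -> R -> R) t0 rho0 p1 p2 eps : 0 < t0 -> 0 < rho0 -> 0 < eps ->
  subdiff m t0 rho0 p1 p2 -> exists r, 0 < r /\ r <= t0 / 2 /\ r <= rho0 / 2 /\
  forall t rho, Rabs (t - t0) <= r -> Rabs (rho - rho0) <= r ->
    - m t rho <= - m t0 rho0 + - p1 * (t - t0) + - p2 * (rho - rho0)
                 + eps * (Rabs (t - t0) + Rabs (rho - rho0)).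
Proof.
  intros Ht0 Hr0 He Hsd.
  destruct (superdiff_box (fun t rho => - m t rho) t0 rho0 (- p1) (- p2) eps Ht0 Hr0 He)
    as [r Hr]; [|exists r; exact Hr].
  intros e Hep. destruct (Hsd e Hep) as [d [Hd Hl]]. exists d. split; auto.
  intros s y Hs Hy Hsd'. specialize (Hl s y Hs Hy Hsd'). lra.
Qed.

Lemma superdiff_slope (m : R -> R -> R) L t0 rho0 p1 p2 : 0 < t0 -> 0 < rho0 ->
  (forall rho rho', 0 <= rho -> 0 <= rho' -> Rabs (m t0 rho - m t0 rho') <= L * Rabs (rho - rho')) ->
  superdiff m t0 rho0 p1 p2 -> p2 <= L.
Proof.
  intros Ht Hr Hlip Hs. apply Rle_plus_epsilon. intros e He.
  destruct (Hs e He) as [d [Hd Hl]].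
  set (y0 := Rmin (rho0 / 2) (d / 2)).
  assert (Hy0 : 0 < y0) by (unfold y0; apply Rmin_glb_lt; lra).
  assert (Hy1 : y0 <= rho0 / 2) by apply Rmin_l. assert (Hy2 : y0 <= d / 2) by apply Rmin_r.
  specialize (Hl t0 (rho0 - y0) Ht ltac:(lra)).
  rewrite Rminus_diag, sqrt_one_dir in Hl.
  replace (rho0 - y0 - rho0) with (- y0) in Hl by ring. rewrite Rabs_Ropp, Rabs_right in Hl by lra.
  specialize (Hl ltac:(lra)).
  pose proof (Hlip rho0 (rho0 - y0) ltac:(lra) ltac:(lra)) as L0.
  replace (rho0 - (rho0 - y0)) with y0 in L0 by ring. rewrite (Rabs_right y0) in L0 by lra.
  apply Rabs_le_bounds in L0.
  apply Rmult_le_reg_r with y0; nra.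
Qed.

Lemma subdiff_slope (m : R -> R -> R) L t0 rho0 p1 p2 : 0 < t0 -> 0 < rho0 ->
  (forall rho rho', 0 <= rho -> 0 <= rho' -> Rabs (m t0 rho - m t0 rho') <= L * Rabs (rho - rho')) ->
  subdiff m t0 rho0 p1 p2 -> p2 <= L.
Proof.
  intros Ht Hr Hlip Hs. apply Rle_plus_epsilon. intros e He.
  destruct (Hs e He) as [d [Hd Hl]].
  set (y0 := d / 2). assert (Hy0 : 0 < y0) by (unfold y0; lra).
  specialize (Hl t0 (rho0 + y0) Ht ltac:(lra)).
  rewrite Rminus_diag, sqrt_one_dir in Hl.
  replace (rho0 + y0 - rho0) with y0 in Hl by ring. rewrite Rabs_right in Hl by lra.
  specialize (Hl ltac:(unfold y0; lra)).
  pose proof (Hlip (rho0 + y0) rho0 ltac:(lra) ltac:(lra)) as L0.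
  replace (rho0 + y0 - rho0) with y0 in L0 by ring. rewrite (Rabs_right y0) in L0 by lra.
  apply Rabs_le_bounds in L0.
  apply Rmult_le_reg_r with y0; nra.
Qed.

(** ** The scheme (M) *)

Section Scheme.
Variables (alpha : R) (m0 : R -> R) (Lm Sm : R) (diag : bool).
Hypothesis alpha_ge1 : 1 <= alpha.
Hypothesis m0_nonneg : forall x, 0 <= x -> 0 <= m0 x.
Hypothesis m0_mono : forall x y, 0 <= x -> x <= y -> m0 x <= m0 y.
Hypothesis m0_at0 : m0 0 = 0.
Hypothesis Sm_lub : is_lub (fun v => exists x, 0 <= x /\ v = Rabs (m0 x)) Sm.
Hypothesis Lm_lub :
  is_lub (fun q => exists x y, 0 <= x /\ x < y /\ q = Rabs (m0 y - m0 x) / (y - x)) Lm.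
Hypothesis Sm_pos : 0 < Sm.

Lemma m0_le_Sm x : 0 <= x -> m0 x <= Sm.
Proof.
  intros Hx. destruct Sm_lub as [Hub _].
  assert (Rabs (m0 x) <= Sm) by (apply Hub; exists x; auto).
  rewrite Rabs_right in H by (apply Rle_ge, m0_nonneg; auto). auto.
Qed.

Lemma m0_lipschitz x y : 0 <= x -> x <= y -> m0 y - m0 x <= Lm * (y - x).
Proof.
  intros Hx Hxy. destruct (Req_dec x y) as [->|N]; [lra|].
  destruct Lm_lub as [Hub _].
  assert (Hq : Rabs (m0 y - m0 x) / (y - x) <= Lm) by (apply Hub; exists x, y; repeat split; lra).
  pose proof (m0_mono x y Hx Hxy).
  rewrite Rabs_right in Hq by lra.
  apply Rmult_le_reg_r with (/ (y - x)); [apply Rinv_0_lt_compat; lra|].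
  replace (Lm * (y - x) * / (y - x)) with Lm by (field; lra). exact Hq.
Qed.

Lemma m0_abs_lipschitz x y : 0 <= x -> 0 <= y -> Rabs (m0 x - m0 y) <= Lm * Rabs (x - y).
Proof.
  intros Hx Hy. destruct (Rle_dec x y).
  - pose proof (m0_lipschitz x y Hx r). pose proof (m0_mono x y Hx r).
    rewrite Rabs_minus_sym, Rabs_right, (Rabs_minus_sym x), Rabs_right; lra.
  - pose proof (m0_lipschitz y x Hy ltac:(lra)). pose proof (m0_mono y x Hy ltac:(lra)).
    rewrite Rabs_right, Rabs_right; lra.
Qed.

Lemma Lm_pos : 0 < Lm.
Proof.
  destruct (Rle_lt_dec Lm 0) as [HLe|]; [exfalso|auto].
  assert (Hzero : forall x, 0 <= x -> m0 x <= 0)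
    by (intros x Hx; pose proof (m0_lipschitz 0 x); nra).
  destruct Sm_lub as [_ Hleast].
  assert (Sm <= 0); [|lra].
  apply Hleast. intros v [x [Hx ->]].
  pose proof (Hzero x Hx); pose proof (m0_nonneg x Hx). rewrite Rabs_right; lra.
Qed.

Lemma m0_tends_to_Sm e : 0 < e -> exists X, 0 <= X /\ forall x, X <= x -> Sm - e < m0 x.
Proof.
  intros He. destruct Sm_lub as [_ Hleast].
  assert (exists x, 0 <= x /\ Sm - e < m0 x) as [X [HX0 HX]].
  { apply Classical_Prop.NNPP; intro Hno.
    assert (Sm <= Sm - e); [|lra]. apply Hleast. intros v [x [Hx ->]].
    rewrite Rabs_right by (apply Rle_ge, m0_nonneg; auto).
    apply Rnot_lt_le. intro; apply Hno; exists x; auto. }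
  exists X; split; auto. intros x Hx. pose proof (m0_mono X x HX0 Hx). lra.
Qed.

Definition LipH := alpha * Rpower Lm (alpha - 1).
Definition supH := Rpower Lm alpha.
Definition cfl := / (2 * LipH * Sm).
Definition HH := Hfun alpha Lm.
Definition MM h := Mgrid m0 alpha Lm Sm h.

Lemma LipH_pos : 0 < LipH.
Proof. unfold LipH. pose proof (Rpower_pos Lm (alpha - 1)). nra. Qed.

Lemma supH_pos : 0 < supH.
Proof. apply Rpower_pos. Qed.

Lemma cfl_pos : 0 < cfl.
Proof. unfold cfl. pose proof LipH_pos. apply Rinv_0_lt_compat. nra. Qed.

(** The CFL condition used for monotonicity. *)
Lemma cfl_condition : cfl * LipH * Sm = / 2.
Proof. unfold cfl. pose proof LipH_pos. field. lra. Qed.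

Lemma ht_eq h : ht_of alpha Lm Sm h = cfl * h.
Proof.
  unfold ht_of, cfl, LipH. rewrite rpow_pos_eq by apply Lm_pos.
  pose proof (Rpower_pos Lm (alpha - 1)). field. repeat split; lra.
Qed.

Lemma HH_lipschitz s s' : s <= s' -> 0 <= HH s' - HH s <= LipH * (s' - s).
Proof. intros; apply Hfun_lipschitz; auto using Lm_pos. Qed.

Lemma HH_nonneg s : 0 <= HH s.
Proof. apply Hfun_nonneg. Qed.

Lemma HH_le s : HH s <= supH.
Proof. apply Hfun_le; auto using Lm_pos. Qed.

(** One step of the scheme: [M_j^(n+1) = update h M_j^n M_(j-1)^n]. *)
Definition denom h a b := 1 + cfl * h * HH ((a - b) / h).
Definition update h a b := a / denom h a b.

Lemma denom_ge1 h a b : 0 < h -> 1 <= denom h a b.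
Proof.
  intros Hh; unfold denom. pose proof cfl_pos. pose proof (HH_nonneg ((a - b) / h)).
  assert (0 <= cfl * h * HH ((a - b) / h)) by (repeat apply Rmult_le_pos; lra). lra.
Qed.

Lemma MM_0 h j : MM h 0 j = m0 (INR j * h).
Proof. reflexivity. Qed.

Lemma MM_S0 h n : MM h (S n) 0 = 0.
Proof. reflexivity. Qed.

Lemma MM_n0 h n : MM h n 0 = 0.
Proof. destruct n; [rewrite MM_0; simpl; rewrite Rmult_0_l; auto | apply MM_S0]. Qed.

Lemma MM_step h n j : MM h (S n) (S j) = update h (MM h n (S j)) (MM h n j).
Proof. unfold MM, update, denom; simpl; rewrite ht_eq; reflexivity. Qed.

Lemma update_range h a b : 0 < h -> 0 <= a -> 0 <= update h a b <= a.
Proof.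
  intros Hh Ha. pose proof (denom_ge1 h a b Hh). unfold update. split.
  - apply Rmult_le_pos; [lra|]. left; apply Rinv_0_lt_compat; lra.
  - apply div_ge1_le; auto.
Qed.

Lemma update_monotone h a' a b' b : 0 < h -> 0 <= a' -> a' <= a -> a' <= Sm -> b' <= b ->
  update h a' b' <= update h a b.
Proof.
  intros Hh Ha'0 Ha' Ha'S Hb. unfold update.
  pose proof (denom_ge1 h a' b' Hh); pose proof (denom_ge1 h a' b Hh);
  pose proof (denom_ge1 h a b Hh).
  pose proof cfl_pos. pose proof LipH_pos. pose proof cfl_condition.
  assert (Hch : 0 <= cfl * h) by nra.
  apply Rle_trans with (a' / denom h a' b).
  - assert (denom h a' b <= denom h a' b').
    { unfold denom.
      assert (Hs : (a' - b) / h <= (a' - b') / h)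
        by (unfold Rdiv; apply Rmult_le_compat_r; [left; apply Rinv_0_lt_compat|]; lra).
      pose proof (HH_lipschitz _ _ Hs). nra. }
    unfold Rdiv. apply Rmult_le_compat_l; auto. apply Rinv_le_contravar; lra.
  - assert (Hs : (a' - b) / h <= (a - b) / h)
      by (unfold Rdiv; apply Rmult_le_compat_r; [left; apply Rinv_0_lt_compat|]; lra).
    pose proof (HH_lipschitz _ _ Hs) as [G1 G2].
    set (u := HH ((a - b) / h)) in *. set (v := HH ((a' - b) / h)) in *.
    (* the increase of the denominator is at most (a - a') / (2 Sm) *)
    assert (Hinc : cfl * h * (u - v) <= cfl * LipH * (a - a')).
    { replace (cfl * LipH * (a - a'))
        with (cfl * h * (LipH * ((a - b) / h - (a' - b) / h))) by (field; lra).
      apply Rmult_le_compat_l; lra. }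
    assert (Hcross : a' * denom h a b <= a * denom h a' b).
    { unfold denom. fold u v.
      assert (a' * (cfl * LipH * (a - a')) <= Sm * (cfl * LipH * (a - a')))
        by (apply Rmult_le_compat_r; [nra|lra]).
      assert (0 <= v) by apply HH_nonneg.
      assert (0 <= (a - a') * (cfl * h * v)) by (apply Rmult_le_pos; [lra|apply Rmult_le_pos; lra]).
      nra. }
    unfold Rdiv. apply Rmult_le_reg_r with (denom h a' b * denom h a b); [nra|].
    replace (a' * / denom h a' b * (denom h a' b * denom h a b)) with (a' * denom h a b)
      by (field; lra).
    replace (a * / denom h a b * (denom h a' b * denom h a b)) with (a * denom h a' b)
      by (field; lra).
    auto.
Qed.

Lemma MM_range h n j : 0 < h -> 0 <= MM h n j <= Sm.
Proof.
  intros Hh. revert j; induction n; intros j.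
  - rewrite MM_0. assert (0 <= INR j * h) by (apply Rmult_le_pos; [apply pos_INR|lra]).
    split; [apply m0_nonneg|apply m0_le_Sm]; auto.
  - destruct j; [rewrite MM_S0; lra|]. rewrite MM_step.
    pose proof (IHn (S j)). pose proof (update_range h (MM h n (S j)) (MM h n j) Hh). lra.
Qed.

Lemma MM_time_step h n j : 0 < h -> 0 <= MM h n j - MM h (S n) j <= cfl * h * Sm * supH.
Proof.
  intros Hh. pose proof cfl_pos. pose proof supH_pos.
  assert (0 <= cfl * h * Sm * supH) by (repeat apply Rmult_le_pos; lra).
  destruct j as [|j]; [rewrite !MM_n0; lra|].
  rewrite MM_step. unfold update.
  set (a := MM h n (S j)). set (b := MM h n j). set (D := denom h a b).
  pose proof (MM_range h n (S j) Hh) as Ha. fold a in Ha.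
  pose proof (denom_ge1 h a b Hh) as HD. fold D in HD.
  assert (HD1 : D - 1 = cfl * h * HH ((a - b) / h)) by (unfold D, denom; ring).
  pose proof (HH_le ((a - b) / h)). pose proof (HH_nonneg ((a - b) / h)).
  assert (E : a - a / D = a * (D - 1) / D) by (field; lra).
  assert (0 <= a * (D - 1)) by (apply Rmult_le_pos; lra).
  rewrite E. split.
  - apply Rmult_le_pos; [lra|left; apply Rinv_0_lt_compat; lra].
  - apply Rle_trans with (a * (D - 1)); [apply div_ge1_le; lra|].
    rewrite HD1. assert (0 <= cfl * h) by nra.
    assert (cfl * h * HH ((a - b) / h) <= cfl * h * supH) by (apply Rmult_le_compat_l; lra).
    nra.
Qed.

Lemma MM_space_step h n j : 0 < h -> 0 <= MM h n (S j) - MM h n j <= Lm * h.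
Proof.
  intros Hh. revert j; induction n; intros j.
  - rewrite !MM_0, S_INR.
    assert (0 <= INR j * h) by (apply Rmult_le_pos; [apply pos_INR|lra]).
    pose proof (m0_mono (INR j * h) ((INR j + 1) * h) ltac:(lra) ltac:(lra)).
    pose proof (m0_lipschitz (INR j * h) ((INR j + 1) * h) ltac:(lra) ltac:(lra)). nra.
  - destruct j as [|j].
    + rewrite MM_S0. pose proof (MM_time_step h n 1 Hh). pose proof (IHn 0%nat).
      rewrite MM_n0 in *. pose proof (MM_range h (S n) 1 Hh). lra.
    + rewrite !MM_step.
      set (a := MM h n (S (S j))). set (b := MM h n (S j)). set (b' := MM h n j).
      pose proof (MM_range h n (S (S j)) Hh) as Ra. pose proof (MM_range h n (S j) Hh) as Rb.
      pose proof (MM_range h n j Hh) as Rb'. pose proof (IHn j) as I1. pose proof (IHn (S j)) as I2.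
      fold a b b' in Ra, Rb, Rb', I1, I2.
      split; [pose proof (update_monotone h b a b' b Hh); lra|].
      (* translating both arguments by [Lm h] leaves the denominator unchanged *)
      assert (Hshift : update h (b + Lm * h) (b' + Lm * h) = update h b b' + Lm * h / denom h b b').
      { unfold update, denom. replace (b + Lm * h - (b' + Lm * h)) with (b - b') by ring.
        field. pose proof (denom_ge1 h b b' Hh) as D. unfold denom in D. lra. }
      pose proof (update_monotone h a (b + Lm * h) b (b' + Lm * h) Hh ltac:(lra) ltac:(lra)
        ltac:(lra) ltac:(lra)).
      pose proof (div_ge1_le (Lm * h) (denom h b b') ltac:(pose proof Lm_pos; nra)
        (denom_ge1 h b b' Hh)). lra.
Qed.

Lemma MM_le_lin h n j : 0 < h -> MM h n j <= Lm * (INR j * h).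
Proof.
  intros Hh. induction j; [rewrite MM_n0; simpl; lra|].
  pose proof (MM_space_step h n j Hh). rewrite S_INR. lra.
Qed.

Lemma MM_le_m0 h n j : 0 < h -> MM h n j <= m0 (INR j * h).
Proof.
  intros Hh. induction n; [rewrite MM_0; lra|]. pose proof (MM_time_step h n j Hh). lra.
Qed.

Lemma MM_ge_m0 h n j : 0 < h -> m0 (INR j * h) - INR n * (cfl * h * Sm * supH) <= MM h n j.
Proof.
  intros Hh. induction n; [rewrite MM_0; simpl; lra|].
  pose proof (MM_time_step h n j Hh). rewrite S_INR. lra.
Qed.

(** Values do not decrease along the characteristic diagonal, hence
    [M_j^n >= m0((j - n) h)]: mass is transported to the right at speed at
    most [h / h_t]. *)
Lemma MM_diag h n j : 0 < h -> MM h n j <= MM h (S n) (S j).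
Proof.
  intros Hh. rewrite MM_step.
  pose proof (MM_range h n j Hh). pose proof (MM_space_step h n j Hh).
  assert (E : update h (MM h n j) (MM h n j) = MM h n j).
  { unfold update, denom, HH. rewrite Rminus_diag, Rdiv_0_l.
    rewrite Hfun_0, Rmult_0_r, Rplus_0_r. field. }
  rewrite <- E at 1. apply update_monotone; lra.
Qed.

Lemma MM_ge_shifted_m0 h n j : 0 < h -> (n <= j)%nat -> m0 ((INR j - INR n) * h) <= MM h n j.
Proof.
  intros Hh. revert j; induction n; intros j Hj.
  - rewrite MM_0. simpl. rewrite Rminus_0_r. lra.
  - destruct j; [lia|]. pose proof (IHn j ltac:(lia)). pose proof (MM_diag h n j Hh).
    rewrite !S_INR. replace (INR j + 1 - (INR n + 1)) with (INR j - INR n) by ring. lra.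
Qed.

Lemma scheme_sub_ineq h n j a b : 0 < h -> MM h n (S j) <= a -> MM h n j <= b ->
  MM h (S n) (S j) * denom h a b <= a.
Proof.
  intros Hh Ha Hb. pose proof (MM_range h n (S j) Hh). pose proof (MM_range h n j Hh).
  pose proof (update_monotone h (MM h n (S j)) a (MM h n j) b Hh ltac:(lra) Ha ltac:(lra) Hb) as F.
  rewrite <- MM_step in F. pose proof (denom_ge1 h a b Hh).
  unfold update, Rdiv in F. apply Rmult_le_compat_r with (r := denom h a b) in F; [|lra].
  rewrite Rmult_assoc, Rinv_l, Rmult_1_r in F by lra. exact F.
Qed.

Lemma scheme_super_ineq h n j a b : 0 < h -> a <= MM h n (S j) -> b <= MM h n j ->
  a <= MM h (S n) (S j) * denom h a b.
Proof.
  intros Hh Ha Hb. pose proof (MM_range h (S n) (S j) Hh). pose proof (denom_ge1 h a b Hh).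
  destruct (Rlt_dec a 0); [nra|].
  pose proof (MM_range h n (S j) Hh).
  pose proof (update_monotone h a (MM h n (S j)) b (MM h n j) Hh ltac:(lra) Ha ltac:(lra) Hb) as F.
  rewrite <- MM_step in F.
  unfold update, Rdiv in F. apply Rmult_le_compat_r with (r := denom h a b) in F; [|lra].
  rewrite Rmult_assoc, Rinv_l, Rmult_1_r in F by lra. exact F.
Qed.

(** The interpolant on the cell with lower-left node [(n, j)], in local
    coordinates [(s, r)] in [[0,1]^2]. *)
Definition cell_interp h n j s r :=
  if diag then
    (if Rle_dec r s
     then MM h n j + s * (MM h (S n) j - MM h n j) + r * (MM h (S n) (S j) - MM h (S n) j)
     else MM h n j + r * (MM h n (S j) - MM h n j) + s * (MM h (S n) (S j) - MM h n (S j)))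
  else
    (if Rle_dec (s + r) 1
     then MM h n j + s * (MM h (S n) j - MM h n j) + r * (MM h n (S j) - MM h n j)
     else MM h (S n) (S j) + (1 - s) * (MM h n (S j) - MM h (S n) (S j))
          + (1 - r) * (MM h (S n) j - MM h (S n) (S j))).

Definition mhh h t rho := mh m0 alpha Lm Sm diag h t rho.

Lemma mhh_cells h t rho : mhh h t rho =
  cell_interp h (nfloor (t / (cfl * h))) (nfloor (rho / h))
    (t / (cfl * h) - INR (nfloor (t / (cfl * h)))) (rho / h - INR (nfloor (rho / h))).
Proof. unfold mhh, mh, cell_interp, MM, nfloor. rewrite ht_eq. reflexivity. Qed.

(** Along [s] the cell interpolant is affine on both sides of the diagonal,
    with slopes given by time differences of [M]. *)
Lemma cell_lipschitz_s h n j r : 0 < h -> 0 <= r <= 1 -> forall s s',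
  Rabs (cell_interp h n j s r - cell_interp h n j s' r) <= Sm * supH * (cfl * h) * Rabs (s - s').
Proof.
  intros Hh Hr.
  assert (T1 : Rabs (MM h (S n) j - MM h n j) <= Sm * supH * (cfl * h))
    by (rewrite Rabs_minus_sym; apply abs_diff_le; pose proof (MM_time_step h n j Hh); lra).
  assert (T2 : Rabs (MM h (S n) (S j) - MM h n (S j)) <= Sm * supH * (cfl * h))
    by (rewrite Rabs_minus_sym; apply abs_diff_le; pose proof (MM_time_step h n (S j) Hh); lra).
  unfold cell_interp. destruct diag.
  - apply (two_piece_lipschitz _ r
      (MM h n j + r * (MM h (S n) (S j) - MM h (S n) j)) (MM h (S n) j - MM h n j)
      (MM h n j + r * (MM h n (S j) - MM h n j)) (MM h (S n) (S j) - MM h n (S j))); auto;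
      intros s0 Hs0; destruct (Rle_dec r s0); try lra; try ring.
    assert (s0 = r) by lra; subst; ring.
  - apply (two_piece_lipschitz _ (1 - r)
      (MM h (S n) (S j) + (MM h n (S j) - MM h (S n) (S j))
        + (1 - r) * (MM h (S n) j - MM h (S n) (S j))) (MM h (S n) (S j) - MM h n (S j))
      (MM h n j + r * (MM h n (S j) - MM h n j)) (MM h (S n) j - MM h n j)); auto;
      intros s0 Hs0; destruct (Rle_dec (s0 + r) 1); try lra; try ring.
    assert (s0 = 1 - r) by lra; subst; ring.
Qed.

(** Along [r] the slopes are space differences of [M]. *)
Lemma cell_lipschitz_r h n j s : 0 < h -> 0 <= s <= 1 -> forall r r',
  Rabs (cell_interp h n j s r - cell_interp h n j s r') <= Lm * h * Rabs (r - r').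
Proof.
  intros Hh Hs.
  assert (T1 : Rabs (MM h (S n) (S j) - MM h (S n) j) <= Lm * h)
    by (apply abs_diff_le, MM_space_step; auto).
  assert (T2 : Rabs (MM h n (S j) - MM h n j) <= Lm * h)
    by (apply abs_diff_le, MM_space_step; auto).
  unfold cell_interp. destruct diag.
  - apply (two_piece_lipschitz _ s
      (MM h n j + s * (MM h (S n) (S j) - MM h n (S j))) (MM h n (S j) - MM h n j)
      (MM h n j + s * (MM h (S n) j - MM h n j)) (MM h (S n) (S j) - MM h (S n) j)); auto;
      intros r0 Hr0; destruct (Rle_dec r0 s); try lra; try ring.
    assert (r0 = s) by lra; subst; ring.
  - apply (two_piece_lipschitz _ (1 - s)
      (MM h (S n) (S j) + (1 - s) * (MM h n (S j) - MM h (S n) (S j))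
        + (MM h (S n) j - MM h (S n) (S j))) (MM h (S n) (S j) - MM h (S n) j)
      (MM h n j + s * (MM h (S n) j - MM h n j)) (MM h n (S j) - MM h n j)); auto;
      intros r0 Hr0; destruct (Rle_dec (s + r0) 1); try lra; try ring.
    assert (r0 = 1 - s) by lra; subst; ring.
Qed.

Lemma cell_match_s h n j r : 0 <= r < 1 -> cell_interp h n j 1 r = cell_interp h (S n) j 0 r.
Proof.
  intros Hr. unfold cell_interp. destruct diag.
  - destruct (Rle_dec r 1); [|lra]. destruct (Rle_dec r 0); [assert (r = 0) by lra; subst|]; ring.
  - destruct (Rle_dec (0 + r) 1); [|lra].
    destruct (Rle_dec (1 + r) 1); [assert (r = 0) by lra; subst|]; ring.
Qed.

Lemma cell_match_r h n j s : 0 <= s < 1 -> cell_interp h n j s 1 = cell_interp h n (S j) s 0.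
Proof.
  intros Hs. unfold cell_interp. destruct diag.
  - destruct (Rle_dec 0 s); [|lra]. destruct (Rle_dec 1 s); [lra|]. ring.
  - destruct (Rle_dec (s + 0) 1); [|lra].
    destruct (Rle_dec (s + 1) 1); [assert (s = 0) by lra; subst|]; ring.
Qed.

Lemma mhh_lipschitz_t h rho t t' : 0 < h -> 0 <= rho -> 0 <= t -> 0 <= t' ->
  Rabs (mhh h t rho - mhh h t' rho) <= Sm * supH * Rabs (t - t').
Proof.
  intros Hh Hr Ht Ht'. rewrite !mhh_cells.
  assert (Hch : 0 < cfl * h) by (pose proof cfl_pos; nra).
  pose proof (frac_range (rho / h) (div_nonneg rho h Hr Hh)).
  apply (glue_lipschitz (cfl * h) (Sm * supH)
    (fun n s => cell_interp h n (nfloor (rho / h)) s (rho / h - INR (nfloor (rho / h))))); auto.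
  - intros n s s' _ _. apply cell_lipschitz_s; auto. lra.
  - intros n. apply cell_match_s; auto.
Qed.

Lemma mhh_lipschitz_r h t rho rho' : 0 < h -> 0 <= t -> 0 <= rho -> 0 <= rho' ->
  Rabs (mhh h t rho - mhh h t rho') <= Lm * Rabs (rho - rho').
Proof.
  intros Hh Ht Hr Hr'. rewrite !mhh_cells.
  assert (Hch : 0 < cfl * h) by (pose proof cfl_pos; nra).
  pose proof (frac_range (t / (cfl * h)) (div_nonneg t (cfl * h) Ht Hch)).
  apply (glue_lipschitz h Lm
    (fun j r => cell_interp h (nfloor (t / (cfl * h))) j (t / (cfl * h) - INR (nfloor (t / (cfl * h)))) r));
    auto.
  - intros j r r' _ _. apply cell_lipschitz_r; auto. lra.
  - intros j. apply cell_match_r; auto.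
Qed.

Definition Klip := Sm * supH + Lm.

Lemma Klip_pos : 0 < Klip.
Proof. unfold Klip. pose proof supH_pos. pose proof Lm_pos. nra. Qed.

Lemma mhh_lipschitz h t rho t' rho' : 0 < h -> 0 <= t -> 0 <= rho -> 0 <= t' -> 0 <= rho' ->
  Rabs (mhh h t rho - mhh h t' rho') <= Klip * (Rabs (t - t') + Rabs (rho - rho')).
Proof.
  intros Hh Ht Hr Ht' Hr'.
  pose proof (mhh_lipschitz_t h rho t t' Hh Hr Ht Ht').
  pose proof (mhh_lipschitz_r h t' rho rho' Hh Ht' Hr Hr').
  pose proof (Rabs_triang (mhh h t rho - mhh h t' rho) (mhh h t' rho - mhh h t' rho')).
  replace (mhh h t rho - mhh h t' rho + (mhh h t' rho - mhh h t' rho'))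
    with (mhh h t rho - mhh h t' rho') in * by ring.
  pose proof (Rabs_pos (t - t')). pose proof (Rabs_pos (rho - rho')).
  pose proof supH_pos. pose proof Lm_pos.
  assert (0 <= Sm * supH * Rabs (rho - rho')) by (apply Rmult_le_pos; nra).
  assert (0 <= Lm * Rabs (t - t')) by nra.
  unfold Klip. nra.
Qed.

Lemma mhh_grid h n j : 0 < h -> mhh h (INR n * (cfl * h)) (INR j * h) = MM h n j.
Proof.
  intros Hh. rewrite mhh_cells. pose proof cfl_pos.
  replace (INR n * (cfl * h) / (cfl * h)) with (INR n) by (field; split; lra).
  replace (INR j * h / h) with (INR j) by (field; lra).
  rewrite !nfloor_INR, !Rminus_diag. unfold cell_interp. destruct diag.
  - destruct (Rle_dec 0 0); [ring|lra].
  - destruct (Rle_dec (0 + 0) 1); [ring|lra].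
Qed.

Lemma mhh_near_grid h t rho : 0 < h -> 0 <= t -> 0 <= rho ->
  Rabs (mhh h t rho - MM h (nfloor (t / (cfl * h))) (nfloor (rho / h))) <= Klip * (cfl * h + h) /\
  0 <= t - INR (nfloor (t / (cfl * h))) * (cfl * h) <= cfl * h /\
  0 <= rho - INR (nfloor (rho / h)) * h <= h.
Proof.
  intros Hh Ht Hr. pose proof cfl_pos.
  assert (Hch : 0 < cfl * h) by nra.
  pose proof (nfloor_cell (cfl * h) t Hch Ht). pose proof (nfloor_cell h rho Hh Hr).
  split; [|split; lra].
  rewrite <- mhh_grid by auto.
  eapply Rle_trans; [apply mhh_lipschitz; auto; apply Rmult_le_pos; try apply pos_INR; lra|].
  apply Rmult_le_compat_l; [left; apply Klip_pos|].
  rewrite !Rabs_right by lra. lra.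
Qed.

(** *** Comparison of two meshes: doubling of variables *)

Definition tnode h n := INR n * (cfl * h).
Definition rnode h j := INR j * h.

Lemma tnode_S h n : tnode h (S n) = tnode h n + cfl * h.
Proof. unfold tnode. rewrite S_INR. ring. Qed.

Lemma rnode_S h j : rnode h (S j) = rnode h j + h.
Proof. unfold rnode. rewrite S_INR. ring. Qed.

Lemma tnode_nonneg h n : 0 < h -> 0 <= tnode h n.
Proof. intros; unfold tnode; pose proof cfl_pos; apply Rmult_le_pos; [apply pos_INR|nra]. Qed.

Lemma rnode_nonneg h j : 0 < h -> 0 <= rnode h j.
Proof. intros; unfold rnode; apply Rmult_le_pos; [apply pos_INR|lra]. Qed.

Definition penalty eps tx rx ty ry := ((tx - ty) ^ 2 + (rx - ry) ^ 2) / (2 * eps).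

Definition doubling h k eps eta n j n' j' :=
  MM h n j - MM k n' j' - penalty eps (tnode h n) (rnode h j) (tnode k n') (rnode k j')
  - eta * tnode h n.

(** The smallest admissible time penalisation [eta]. *)
Definition eta_min h k eps := (cfl * h + cfl * k) / (2 * eps) + Sm * LipH * (h + k) / (2 * eps).

Definition Cdbl := Lm ^ 2 + (Sm * supH) ^ 2.

Lemma Cdbl_pos : 0 < Cdbl.
Proof. unfold Cdbl. pose proof Lm_pos. pose proof (pow2_ge_0 (Sm * supH)). nra. Qed.

Lemma penalty_nonneg eps a b c d : 0 < eps -> 0 <= penalty eps a b c d.
Proof.
  intros; unfold penalty; apply Rmult_le_pos;
    [apply Rplus_le_le_0_compat; apply pow2_ge_0|left; apply Rinv_0_lt_compat; lra].
Qed.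

Lemma young_bound eps L u : 0 < eps -> L * Rabs u - u ^ 2 / (2 * eps) <= L ^ 2 * eps / 2.
Proof.
  intros He. assert (E : u ^ 2 = Rabs u ^ 2) by (rewrite RPow_abs, Rabs_right; [auto|apply Rle_ge; nra]).
  rewrite E. set (a := Rabs u).
  assert (L ^ 2 * eps / 2 - (L * a - a ^ 2 / (2 * eps)) = (a - L * eps) ^ 2 / (2 * eps)) by (field; lra).
  assert (0 <= (a - L * eps) ^ 2 / (2 * eps))
    by (apply Rmult_le_pos; [apply pow2_ge_0|left; apply Rinv_0_lt_compat; lra]).
  lra.
Qed.

Lemma penalty_absorbs eps a b : 0 < eps ->
  Lm * Rabs a + Sm * supH * Rabs b - (b ^ 2 + a ^ 2) / (2 * eps) <= Cdbl * eps.
Proof.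
  intros He. pose proof (young_bound eps Lm a He). pose proof (young_bound eps (Sm * supH) b He).
  unfold Cdbl. replace ((b ^ 2 + a ^ 2) / (2 * eps)) with (a ^ 2 / (2 * eps) + b ^ 2 / (2 * eps))
    by (field; lra).
  assert (0 <= (Lm ^ 2 + (Sm * supH) ^ 2) * eps)
    by (apply Rmult_le_pos; [apply Rplus_le_le_0_compat; apply pow2_ge_0|lra]).
  lra.
Qed.

Lemma doubling_boundary h k eps eta n j n' j' : 0 < h -> 0 < k -> 0 < eps -> 0 <= eta ->
  (n = 0 \/ j = 0 \/ n' = 0 \/ j' = 0)%nat ->
  doubling h k eps eta n j n' j' <= Cdbl * eps.
Proof.
  intros Hh Hk He Heta Hbd. unfold doubling.
  pose proof (rnode_nonneg h j Hh) as Hrx. pose proof (rnode_nonneg k j' Hk) as Hry.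
  pose proof (tnode_nonneg h n Hh) as Htx. pose proof (tnode_nonneg k n' Hk) as Hty.
  pose proof (MM_range h n j Hh) as RA. pose proof (MM_range k n' j' Hk) as RB.
  pose proof (penalty_nonneg eps (tnode h n) (rnode h j) (tnode k n') (rnode k j') He) as Hpen.
  assert (Heta_t : 0 <= eta * tnode h n) by (apply Rmult_le_pos; lra).
  assert (HC : 0 <= Cdbl * eps) by (pose proof Cdbl_pos; nra).
  pose proof (Rabs_pos (tnode h n - tnode k n')) as Hdt. pose proof supH_pos.
  assert (HSt : 0 <= Sm * supH * Rabs (tnode h n - tnode k n')) by (apply Rmult_le_pos; nra).
  (* the penalty absorbs [Lm |r_x - r_y| + Sm supH |t_x - t_y|] *)
  pose proof (penalty_absorbs eps (rnode h j - rnode k j') (tnode h n - tnode k n') He) as Habs.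
  fold (penalty eps (tnode h n) (rnode h j) (tnode k n') (rnode k j')) in Habs.
  pose proof (m0_abs_lipschitz (rnode h j) (rnode k j') Hrx Hry) as Hm0.
  pose proof (Rle_abs (m0 (rnode h j) - m0 (rnode k j'))).
  destruct Hbd as [-> | [-> | [-> | ->]]].
  - (* initial time for the first mesh: [M^k] has decreased by at most [Sm supH t_y] *)
    pose proof (MM_ge_m0 k n' j' Hk) as Hdec.
    replace (INR n' * (cfl * k * Sm * supH)) with (Sm * supH * tnode k n') in Hdec
      by (unfold tnode; ring).
    assert (E0 : tnode h 0 = 0) by (unfold tnode; simpl; ring).
    rewrite E0, Rminus_0_l, Rabs_Ropp in *. rewrite (Rabs_right (tnode k n')) in Habs by lra.
    rewrite MM_0. fold (rnode h j) (rnode k j') in *. lra.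
  - rewrite MM_n0. lra.
  - pose proof (MM_le_m0 h n j Hh). rewrite MM_0. fold (rnode h j) (rnode k j') in *. lra.
  - pose proof (MM_le_lin h n j Hh) as Hlin. fold (rnode h j) in Hlin. rewrite MM_n0.
    assert (E0 : rnode k 0 = 0) by (unfold rnode; simpl; ring).
    rewrite E0, Rminus_0_r, Rabs_right in * by lra. lra.
Qed.

(** At a maximiser, moving [x] one node back in time (and space) gives the
    discrete subsolution inequality for [M^h] at [x]. *)
Lemma doubling_sub_side h k eps eta n j n' j' : 0 < h -> 0 < eps ->
  doubling h k eps eta n (S j) n' j' <= doubling h k eps eta (S n) (S j) n' j' ->
  doubling h k eps eta n j n' j' <= doubling h k eps eta (S n) (S j) n' j' ->
  MM h (S n) (S j) * HH ((rnode h (S j) - rnode k j') / eps - h / (2 * eps))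
    <= - (tnode h (S n) - tnode k n') / eps + cfl * h / (2 * eps) - eta.
Proof.
  intros Hh He M1 M2. unfold doubling in M1, M2.
  pose proof cfl_pos. assert (Htau : 0 < cfl * h) by nra.
  set (A := MM h (S n) (S j)).
  set (tx := tnode h (S n)). set (rx := rnode h (S j)).
  set (ty := tnode k n'). set (ry := rnode k j').
  set (slope_t := - (tx - ty) / eps + cfl * h / (2 * eps)).
  set (slope_r := (rx - ry) / eps - h / (2 * eps)).
  assert (Ptx : tnode h n = tx - cfl * h) by (unfold tx; rewrite tnode_S; ring).
  assert (Prx : rnode h j = rx - h) by (unfold rx; rewrite rnode_S; ring).
  assert (D1 : penalty eps (tx - cfl * h) rx ty ry - penalty eps tx rx ty ry = cfl * h * slope_t)
    by (unfold penalty, slope_t; field; lra).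
  assert (D2 : penalty eps (tx - cfl * h) (rx - h) ty ry - penalty eps tx rx ty ry
               = cfl * h * slope_t - h * slope_r)
    by (unfold penalty, slope_t, slope_r; field; lra).
  rewrite Ptx in M1, M2. rewrite Prx in M2. fold A tx rx ty ry in M1, M2.
  set (a := A + cfl * h * (slope_t - eta)). set (b := a - h * slope_r).
  pose proof (scheme_sub_ineq h n j a b Hh ltac:(unfold a; nra) ltac:(unfold b, a; nra)) as Hs.
  fold A in Hs. unfold denom in Hs.
  replace ((a - b) / h) with slope_r in Hs by (unfold b; field; lra).
  assert (Hscaled : cfl * h * (A * HH slope_r) <= cfl * h * (slope_t - eta))
    by (unfold a in Hs; nra).
  apply Rmult_le_reg_l in Hscaled; [exact Hscaled|lra].
Qed.

(** Symmetrically, moving [y] back gives the supersolution inequality for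
    [M^k] at [y]. *)
Lemma doubling_super_side h k eps eta n j n' j' : 0 < k -> 0 < eps ->
  doubling h k eps eta n j n' (S j') <= doubling h k eps eta n j (S n') (S j') ->
  doubling h k eps eta n j n' j' <= doubling h k eps eta n j (S n') (S j') ->
  - (tnode h n - tnode k (S n')) / eps - cfl * k / (2 * eps)
    <= MM k (S n') (S j') * HH ((rnode h j - rnode k (S j')) / eps + k / (2 * eps)).
Proof.
  intros Hk He M3 M4. unfold doubling in M3, M4.
  pose proof cfl_pos. assert (Hkap : 0 < cfl * k) by nra.
  set (B := MM k (S n') (S j')).
  set (tx := tnode h n). set (rx := rnode h j).
  set (ty := tnode k (S n')). set (ry := rnode k (S j')).
  set (slope_t := - (tx - ty) / eps - cfl * k / (2 * eps)).
  set (slope_r := (rx - ry) / eps + k / (2 * eps)).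
  assert (Pty : tnode k n' = ty - cfl * k) by (unfold ty; rewrite tnode_S; ring).
  assert (Pry : rnode k j' = ry - k) by (unfold ry; rewrite rnode_S; ring).
  assert (D1 : penalty eps tx rx ty ry - penalty eps tx rx (ty - cfl * k) ry = cfl * k * slope_t)
    by (unfold penalty, slope_t; field; lra).
  assert (D2 : penalty eps tx rx ty ry - penalty eps tx rx (ty - cfl * k) (ry - k)
               = cfl * k * slope_t - k * slope_r)
    by (unfold penalty, slope_t, slope_r; field; lra).
  rewrite Pty in M3, M4. rewrite Pry in M4. fold B tx rx ty ry in M3, M4.
  set (a := B + cfl * k * slope_t). set (b := a - k * slope_r).
  pose proof (scheme_super_ineq k n' j' a b Hk ltac:(unfold a; nra) ltac:(unfold b, a; nra)) as Hs.
  fold B in Hs. unfold denom in Hs.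
  replace ((a - b) / k) with slope_r in Hs by (unfold b; field; lra).
  assert (Hscaled : cfl * k * slope_t <= cfl * k * (B * HH slope_r)) by (unfold a in Hs; nra).
  apply Rmult_le_reg_l in Hscaled; [exact Hscaled|lra].
Qed.

(** With [eta > eta_min] the two inequalities are incompatible with
    [M^h(x) >= M^k(y)]: at a maximiser over the predecessors of an interior
    pair of nodes, [M^h(x) < M^k(y)]. *)
Lemma doubling_interior h k eps eta n j n' j' : 0 < h -> 0 < k -> 0 < eps ->
  eta_min h k eps < eta ->
  (forall a b c d, (a <= S n)%nat -> (b <= S j)%nat -> (c <= S n')%nat -> (d <= S j')%nat ->
     doubling h k eps eta a b c d <= doubling h k eps eta (S n) (S j) (S n') (S j')) ->
  MM h (S n) (S j) < MM k (S n') (S j').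
Proof.
  intros Hh Hk He Heta Hmax.
  pose proof (doubling_sub_side h k eps eta n j (S n') (S j') Hh He
    (Hmax n (S j) (S n') (S j') ltac:(lia) ltac:(lia) ltac:(lia) ltac:(lia))
    (Hmax n j (S n') (S j') ltac:(lia) ltac:(lia) ltac:(lia) ltac:(lia))) as Hsub.
  pose proof (doubling_super_side h k eps eta (S n) (S j) n' j' Hk He
    (Hmax (S n) (S j) n' (S j') ltac:(lia) ltac:(lia) ltac:(lia) ltac:(lia))
    (Hmax (S n) (S j) n' j' ltac:(lia) ltac:(lia) ltac:(lia) ltac:(lia))) as Hsup.
  set (A := MM h (S n) (S j)) in *. set (B := MM k (S n') (S j')) in *.
  set (q := (rnode h (S j) - rnode k (S j')) / eps) in *.
  assert (Hq : q - h / (2 * eps) <= q + k / (2 * eps)).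
  { assert (0 <= h / (2 * eps)) by (apply div_nonneg; lra).
    assert (0 <= k / (2 * eps)) by (apply div_nonneg; lra). lra. }
  pose proof (HH_lipschitz _ _ Hq) as [L1 L2].
  replace (q + k / (2 * eps) - (q - h / (2 * eps))) with ((h + k) / (2 * eps)) in L2
    by (field; lra).
  pose proof (HH_nonneg (q - h / (2 * eps))). pose proof LipH_pos.
  pose proof (MM_range h (S n) (S j) Hh). pose proof (MM_range k (S n') (S j') Hk).
  fold A B in H1, H2.
  destruct (Rlt_dec A B) as [|HAB]; [auto|exfalso].
  (* otherwise [B v - A u <= B (v - u) <= Sm LipH (h + k) / (2 eps)] *)
  assert (B * HH (q - h / (2 * eps)) <= A * HH (q - h / (2 * eps))) by (apply Rmult_le_compat_r; lra).
  assert (B * (HH (q + k / (2 * eps)) - HH (q - h / (2 * eps))) <= Sm * (LipH * ((h + k) / (2 * eps))))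
    by (apply Rmult_le_compat; lra).
  unfold eta_min in Heta.
  assert (E : Sm * (LipH * ((h + k) / (2 * eps))) = Sm * LipH * (h + k) / (2 * eps)) by (field; lra).
  assert (E' : cfl * h / (2 * eps) + cfl * k / (2 * eps) = (cfl * h + cfl * k) / (2 * eps))
    by (field; lra).
  lra.
Qed.

Lemma doubling_bound h k eps eta N J N' J' n j n' j' : 0 < h -> 0 < k -> 0 < eps ->
  eta_min h k eps < eta -> (n <= N)%nat -> (j <= J)%nat -> (n' <= N')%nat -> (j' <= J')%nat ->
  doubling h k eps eta n j n' j' <= Cdbl * eps.
Proof.
  intros Hh Hk He Heta Hn Hj Hn' Hj'.
  set (f := fun x : (nat * nat) * (nat * nat) =>
    doubling h k eps eta (fst (fst x)) (snd (fst x)) (fst (snd x)) (snd (snd x))).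
  destruct (list_argmax (list_prod (grid N J) (grid N' J')) (fun _ => True) f
    (fun _ => left I) ((n, j), (n', j'))) as [[[n0 j0] [n0' j0']] [Hin [_ Hmax]]]; auto.
  { apply in_prod; apply in_grid; auto. }
  apply in_prod_iff in Hin as [Hin Hin']. apply in_grid in Hin, Hin'.
  assert (Hle : forall a b c d, (a <= n0)%nat -> (b <= j0)%nat -> (c <= n0')%nat -> (d <= j0')%nat ->
    doubling h k eps eta a b c d <= doubling h k eps eta n0 j0 n0' j0').
  { intros a b c d Ha Hb Hc Hd. apply (Hmax ((a, b), (c, d))); auto.
    apply in_prod; apply in_grid; lia. }
  apply Rle_trans with (doubling h k eps eta n0 j0 n0' j0').
  { apply (Hmax ((n, j), (n', j'))); auto. apply in_prod; apply in_grid; auto. }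
  assert (Heta0 : 0 <= eta).
  { unfold eta_min in Heta. pose proof cfl_pos. pose proof LipH_pos.
    assert (0 <= (cfl * h + cfl * k) / (2 * eps)) by (apply div_nonneg; nra).
    assert (0 <= Sm * LipH * (h + k) / (2 * eps)) by (apply div_nonneg; [|lra];
      apply Rmult_le_pos; [|lra]; nra).
    lra. }
  destruct n0 as [|n1]; [apply doubling_boundary; auto|].
  destruct j0 as [|j1]; [apply doubling_boundary; auto|].
  destruct n0' as [|n1']; [apply doubling_boundary; auto|].
  destruct j0' as [|j1']; [apply doubling_boundary; auto|].
  pose proof (doubling_interior h k eps eta n1 j1 n1' j1' Hh Hk He Heta Hle).
  unfold doubling.
  pose proof (penalty_nonneg eps (tnode h (S n1)) (rnode h (S j1)) (tnode k (S n1')) (rnode k (S j1')) He).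
  pose proof (tnode_nonneg h (S n1) Hh). pose proof Cdbl_pos.
  assert (0 <= eta * tnode h (S n1)) by (apply Rmult_le_pos; lra).
  nra.
Qed.

Definition cauchy_rate eps T :=
  (cfl ^ 2 + 1) / (2 * eps) + T * ((cfl + Sm * LipH) / (2 * eps) + 1) + Klip * (1 + cfl).

Lemma cauchy_rate_nonneg eps T : 0 < eps -> 0 <= T -> 0 <= cauchy_rate eps T.
Proof.
  intros He HT. unfold cauchy_rate. pose proof cfl_pos. pose proof LipH_pos. pose proof Klip_pos.
  assert (0 <= (cfl ^ 2 + 1) / (2 * eps)) by (apply div_nonneg; nra).
  assert (0 <= (cfl + Sm * LipH) / (2 * eps)) by (apply div_nonneg; nra).
  nra.
Qed.

(** Comparison of the interpolants for two mesh sizes, obtained from the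
    bound on the doubled function at the grid nodes below [(t, rho)] with
    the time penalisation [eta = eta_min + h + k]. *)
Lemma mesh_comparison h k eps t rho : 0 < h -> 0 < k -> h + k <= 1 -> 0 < eps ->
  0 <= t -> 0 <= rho ->
  mhh h t rho - mhh k t rho <= Cdbl * eps + (h + k) * cauchy_rate eps t.
Proof.
  intros Hh Hk Hs He Ht Hr. pose proof cfl_pos. pose proof LipH_pos. pose proof Klip_pos.
  destruct (mhh_near_grid h t rho Hh Ht Hr) as [N1 [T1 R1]].
  destruct (mhh_near_grid k t rho Hk Ht Hr) as [N2 [T2 R2]].
  set (n := nfloor (t / (cfl * h))) in *. set (j := nfloor (rho / h)) in *.
  set (n' := nfloor (t / (cfl * k))) in *. set (j' := nfloor (rho / k)) in *.
  set (eta := eta_min h k eps + (h + k)).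
  pose proof (doubling_bound h k eps eta n j n' j' n j n' j' Hh Hk He
    ltac:(unfold eta; lra) (le_n _) (le_n _) (le_n _) (le_n _)) as P.
  unfold doubling, tnode, rnode in P.
  set (tx := INR n * (cfl * h)) in *. set (rx := INR j * h) in *.
  set (ty := INR n' * (cfl * k)) in *. set (ry := INR j' * k) in *.
  (* the penalty at these nodes is of order (h + k)^2 / eps *)
  assert (Hpen : penalty eps tx rx ty ry <= (h + k) ^ 2 * ((cfl ^ 2 + 1) / (2 * eps))).
  { unfold penalty.
    replace ((h + k) ^ 2 * ((cfl ^ 2 + 1) / (2 * eps)))
      with (((cfl * h + cfl * k) ^ 2 + (h + k) ^ 2) / (2 * eps)) by (field; lra).
    apply Rmult_le_compat_r; [left; apply Rinv_0_lt_compat; lra|].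
    assert ((tx - ty) ^ 2 <= (cfl * h + cfl * k) ^ 2).
    { rewrite <- !Rsqr_pow2. apply Rsqr_le_abs_1. rewrite (Rabs_right (cfl * h + cfl * k)) by nra.
      apply Rabs_le. lra. }
    assert ((rx - ry) ^ 2 <= (h + k) ^ 2).
    { rewrite <- !Rsqr_pow2. apply Rsqr_le_abs_1. rewrite (Rabs_right (h + k)) by nra.
      apply Rabs_le. lra. }
    lra. }
  assert (Hsq : (h + k) ^ 2 * ((cfl ^ 2 + 1) / (2 * eps)) <= (h + k) * ((cfl ^ 2 + 1) / (2 * eps))).
  { apply Rmult_le_compat_r; [apply div_nonneg; nra|]. nra. }
  assert (Heta : eta = (h + k) * ((cfl + Sm * LipH) / (2 * eps) + 1))
    by (unfold eta, eta_min; field; lra).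
  assert (Heta0 : 0 <= eta) by (rewrite Heta; apply Rmult_le_pos; [lra|];
    pose proof (div_nonneg (cfl + Sm * LipH) (2 * eps) ltac:(nra) ltac:(lra)); lra).
  assert (Heta_t : eta * tx <= eta * t) by (apply Rmult_le_compat_l; lra).
  pose proof (Rle_abs (mhh h t rho - MM h n j)).
  pose proof (Rle_abs (MM k n' j' - mhh k t rho)) as Q2. rewrite Rabs_minus_sym in Q2.
  unfold cauchy_rate. rewrite Heta in P, Heta_t. lra.
Qed.

Lemma mhh_uniformly_cauchy e T : 0 < e -> 0 <= T -> exists delta, 0 < delta /\
  forall h k t rho, 0 < h < delta -> 0 < k < delta -> 0 <= t <= T -> 0 <= rho ->
    Rabs (mhh h t rho - mhh k t rho) <= e.
Proof.
  intros He HT. pose proof Cdbl_pos.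
  set (eps := e / (4 * Cdbl)).
  assert (Heps : 0 < eps) by (unfold eps; apply Rmult_lt_0_compat; [lra|apply Rinv_0_lt_compat; lra]).
  assert (HCe : Cdbl * eps = e / 4) by (unfold eps; field; lra).
  pose proof (cauchy_rate_nonneg eps T Heps HT) as HD. set (D := cauchy_rate eps T) in *.
  exists (Rmin (1 / 2) (e / (4 * (D + 1)))). split.
  { apply Rmin_glb_lt; [lra|]. apply Rmult_lt_0_compat; [lra|apply Rinv_0_lt_compat; lra]. }
  assert (main : forall h k t rho, 0 < h < Rmin (1 / 2) (e / (4 * (D + 1))) ->
    0 < k < Rmin (1 / 2) (e / (4 * (D + 1))) -> 0 <= t <= T -> 0 <= rho ->
    mhh h t rho - mhh k t rho <= e).
  { intros h k t rho [Hh1 Hh2] [Hk1 Hk2] Ht Hr.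
    pose proof (Rmin_l (1 / 2) (e / (4 * (D + 1)))). pose proof (Rmin_r (1 / 2) (e / (4 * (D + 1)))).
    pose proof (mesh_comparison h k eps t rho Hh1 Hk1 ltac:(lra) Heps (proj1 Ht) Hr) as C.
    assert (Hrate : cauchy_rate eps t <= D).
    { unfold D, cauchy_rate. pose proof cfl_pos. pose proof LipH_pos.
      pose proof (div_nonneg (cfl + Sm * LipH) (2 * eps) ltac:(nra) ltac:(lra)). nra. }
    assert (Hsum : (h + k) * (D + 1) <= e / 2).
    { apply Rmult_le_reg_r with (/ (D + 1)); [apply Rinv_0_lt_compat; lra|].
      rewrite Rmult_assoc, Rinv_r, Rmult_1_r by lra.
      replace (e / 2 * / (D + 1)) with (2 * (e / (4 * (D + 1)))) by (field; lra). lra. }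
    pose proof (cauchy_rate_nonneg eps t Heps (proj1 Ht)). nra. }
  intros h k t rho Hh Hk Ht Hr. apply Rabs_le. split.
  - pose proof (main k h t rho Hk Hh Ht Hr). lra.
  - apply main; auto.
Qed.

Definition hseq (i : nat) := / (INR i + 1).

Lemma hseq_pos i : 0 < hseq i.
Proof. unfold hseq. apply Rinv_0_lt_compat. pose proof (pos_INR i). lra. Qed.

Lemma hseq_small d : 0 < d -> exists N, forall i, (i >= N)%nat -> hseq i < d.
Proof.
  intros Hd. destruct (archimed_cor1 d Hd) as [N [H1 H2]]. exists N. intros i Hi.
  unfold hseq. eapply Rle_lt_trans; [|exact H1].
  apply Rinv_le_contravar; [apply lt_0_INR; lia|]. apply le_INR in Hi. lra.
Qed.

(** [m(t, rho)] is the limit of [m^h(t, rho)] along [h = 1/(i+1)]. *)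
Definition mlim t rho := epsilon (inhabits 0) (fun l => Un_cv (fun i => mhh (hseq i) t rho) l).

Lemma mlim_cv t rho : 0 <= t -> 0 <= rho -> Un_cv (fun i => mhh (hseq i) t rho) (mlim t rho).
Proof.
  intros Ht Hr. unfold mlim. apply epsilon_spec.
  assert (Hcauchy : Cauchy_crit (fun i => mhh (hseq i) t rho)).
  { intros e He. destruct (mhh_uniformly_cauchy (e / 2) t ltac:(lra) Ht) as [d [Hd Hc]].
    destruct (hseq_small d Hd) as [N HN]. exists N. intros a b Ha Hb. unfold Rdist.
    eapply Rle_lt_trans; [apply Hc; try (split; [apply hseq_pos|apply HN; auto]); lra|lra]. }
  destruct (R_complete _ Hcauchy) as [l Hl]. exists l. exact Hl.
Qed.

Lemma limit_close (u : nat -> R) l c e : Un_cv u l ->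
  (exists N, forall i, (i >= N)%nat -> Rabs (c - u i) <= e) -> Rabs (c - l) <= e.
Proof.
  intros Hu [N HN]. apply Rle_plus_epsilon. intros d Hd.
  destruct (Hu d Hd) as [N' HN']. specialize (HN (max N N') ltac:(lia)).
  specialize (HN' (max N N') ltac:(lia)). unfold Rdist in HN'.
  pose proof (Rabs_triang (c - u (max N N')) (u (max N N') - l)).
  replace (c - u (max N N') + (u (max N N') - l)) with (c - l) in H by ring. lra.
Qed.

Lemma mhh_converges e T : 0 < e -> 0 <= T -> exists delta, 0 < delta /\
  forall h t rho, 0 < h < delta -> 0 <= t <= T -> 0 <= rho -> Rabs (mhh h t rho - mlim t rho) <= e.
Proof.
  intros He HT. destruct (mhh_uniformly_cauchy e T He HT) as [d [Hd Hc]]. exists d. split; auto.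
  intros h t rho Hh Ht Hr. apply (limit_close (fun i => mhh (hseq i) t rho)); [apply mlim_cv; lra|].
  destruct (hseq_small d Hd) as [N HN]. exists N. intros i Hi.
  apply Hc; auto. split; [apply hseq_pos|auto].
Qed.

Lemma mlim_approx_pair e t rho t' rho' : 0 < e -> 0 <= t -> 0 <= rho -> 0 <= t' -> 0 <= rho' ->
  exists h, 0 < h /\ Rabs (mlim t rho - mhh h t rho) <= e /\ Rabs (mlim t' rho' - mhh h t' rho') <= e.
Proof.
  intros He Ht Hr Ht' Hr'.
  destruct (mhh_converges e (Rmax t t') He ltac:(apply Rmax_case; lra)) as [d [Hd Hap]].
  exists (d / 2). split; [lra|].
  rewrite !(Rabs_minus_sym (mlim _ _)). split; apply Hap; try lra.
  - split; [lra|apply Rmax_l].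
  - split; [lra|apply Rmax_r].
Qed.

Lemma mlim_lipschitz t rho t' rho' : 0 <= t -> 0 <= rho -> 0 <= t' -> 0 <= rho' ->
  Rabs (mlim t rho - mlim t' rho') <= Klip * (Rabs (t - t') + Rabs (rho - rho')).
Proof.
  intros Ht Hr Ht' Hr'. apply Rle_plus_epsilon. intros e He.
  destruct (mlim_approx_pair (e / 2) t rho t' rho' ltac:(lra) Ht Hr Ht' Hr') as [h [Hh [A1 A2]]].
  pose proof (mhh_lipschitz h t rho t' rho' Hh Ht Hr Ht' Hr').
  apply Rabs_le_bounds in A1, A2, H. apply Rabs_le. lra.
Qed.

Lemma mlim_lipschitz_r t rho rho' : 0 <= t -> 0 <= rho -> 0 <= rho' ->
  Rabs (mlim t rho - mlim t rho') <= Lm * Rabs (rho - rho').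
Proof.
  intros Ht Hr Hr'. apply Rle_plus_epsilon. intros e He.
  destruct (mlim_approx_pair (e / 2) t rho t rho' ltac:(lra) Ht Hr Ht Hr') as [h [Hh [A1 A2]]].
  pose proof (mhh_lipschitz_r h t rho rho' Hh Ht Hr Hr').
  apply Rabs_le_bounds in A1, A2, H. apply Rabs_le. lra.
Qed.

Lemma mlim_grid_close e t rho : 0 < e -> 0 <= t -> 0 <= rho -> exists h0, 0 < h0 /\
  forall h, 0 < h < h0 -> Rabs (mlim t rho - MM h (nfloor (t / (cfl * h))) (nfloor (rho / h))) <= e.
Proof.
  intros He Ht Hr. destruct (mhh_converges (e / 2) t ltac:(lra) Ht) as [d [Hd Hap]].
  pose proof Klip_pos. pose proof cfl_pos.
  (* below [h0] both the convergence error and the cell size are small *)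
  destruct (small_mesh 0 d 1 (Klip * (cfl + 1)) (e / 2) ltac:(lra) Hd ltac:(lra) ltac:(nra) ltac:(lra))
    as [h0 [[Hh0 Hh0d] [_ [_ Hh0e]]]].
  exists h0. split; auto. intros h [Hh1 Hh2].
  destruct (mhh_near_grid h t rho Hh1 Ht Hr) as [N1 _].
  pose proof (Hap h t rho ltac:(lra) ltac:(lra) Hr) as A.
  assert (Klip * (cfl + 1) * h <= Klip * (cfl + 1) * h0) by (apply Rmult_le_compat_l; nra).
  apply Rabs_le_bounds in A, N1. apply Rabs_le. lra.
Qed.

Lemma mlim_bounds_from_grid lo hi t rho : 0 <= t -> 0 <= rho ->
  (forall e, 0 < e -> exists h1, 0 < h1 /\ forall h, 0 < h < h1 ->
     lo - e <= MM h (nfloor (t / (cfl * h))) (nfloor (rho / h)) <= hi + e) ->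
  lo <= mlim t rho <= hi.
Proof.
  intros Ht Hr Hgrid.
  assert (key : forall e, 0 < e -> lo - 2 * e <= mlim t rho <= hi + 2 * e).
  { intros e He. destruct (Hgrid e He) as [h1 [Hh1 Hb]].
    destruct (mlim_grid_close e t rho He Ht Hr) as [h0 [Hh0 Hc]].
    set (h := Rmin h0 h1 / 2).
    assert (0 < h < h0 /\ 0 < h < h1) as [H0 H1].
    { unfold h. pose proof (Rmin_l h0 h1). pose proof (Rmin_r h0 h1).
      assert (0 < Rmin h0 h1) by (apply Rmin_glb_lt; auto). lra. }
    specialize (Hc h H0). specialize (Hb h H1). apply Rabs_le_bounds in Hc. lra. }
  split.
  - apply Ropp_le_cancel. apply Rle_plus_epsilon. intros e He.
    pose proof (key (e / 2) ltac:(lra)). lra.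
  - apply Rle_plus_epsilon. intros e He. pose proof (key (e / 2) ltac:(lra)). lra.
Qed.

Lemma mlim_range t rho : 0 <= t -> 0 <= rho -> 0 <= mlim t rho <= Sm.
Proof.
  intros Ht Hr. apply mlim_bounds_from_grid; auto. intros e He.
  exists 1. split; [lra|]. intros h Hh. pose proof (MM_range h (nfloor (t / (cfl * h))) (nfloor (rho / h))).
  lra.
Qed.

Lemma mlim_initial rho : 0 <= rho -> mlim 0 rho = m0 rho.
Proof.
  intros Hr. pose proof Lm_pos.
  enough (m0 rho <= mlim 0 rho <= m0 rho) by lra.
  apply mlim_bounds_from_grid; [lra|auto|]. intros e He.
  exists (e / Lm). split; [apply Rmult_lt_0_compat; [lra|apply Rinv_0_lt_compat; lra]|].
  intros h [Hh1 Hh2]. rewrite nfloor_zero, MM_0.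
  (* the node below [rho] is within [h] of it and [m0] is [Lm]-Lipschitz *)
  pose proof (nfloor_cell h rho Hh1 Hr) as [C1 C2].
  assert (0 <= INR (nfloor (rho / h)) * h) by (apply Rmult_le_pos; [apply pos_INR|lra]).
  pose proof (m0_abs_lipschitz (INR (nfloor (rho / h)) * h) rho ltac:(lra) Hr) as L.
  rewrite (Rabs_left1 (INR (nfloor (rho / h)) * h - rho)) in L by lra.
  assert (Lm * h <= e) by (apply Rmult_lt_compat_l with (r := Lm) in Hh2; [|lra];
    replace (Lm * (e / Lm)) with e in Hh2 by (field; lra); lra).
  apply Rabs_le_bounds in L. nra.
Qed.

Lemma mlim_boundary t : 0 <= t -> mlim t 0 = 0.
Proof.
  intros Ht. enough (0 <= mlim t 0 <= 0) by lra.
  apply mlim_bounds_from_grid; [lra|lra|]. intros e He.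
  exists 1. split; [lra|]. intros h Hh. rewrite nfloor_zero, MM_n0. lra.
Qed.

(** Finite speed of propagation: [m(t, rho) >= m0(rho - t / cfl - 1)]. *)
Lemma mlim_lower t rho : 0 <= t -> t / cfl + 1 <= rho -> m0 (rho - t / cfl - 1) <= mlim t rho.
Proof.
  intros Ht Hr. pose proof cfl_pos.
  assert (0 <= t / cfl) by (apply div_nonneg; lra).
  enough (m0 (rho - t / cfl - 1) <= mlim t rho <= Sm) by lra.
  apply mlim_bounds_from_grid; [lra|lra|]. intros e He.
  exists 1. split; [lra|]. intros h [Hh Hh1].
  assert (Hch : 0 < cfl * h) by nra.
  pose proof (nfloor_cell (cfl * h) t Hch Ht) as [A1 A2].
  pose proof (nfloor_cell h rho Hh ltac:(lra)) as [B1 B2].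
  set (n := nfloor (t / (cfl * h))) in *. set (j := nfloor (rho / h)) in *.
  assert (E1 : INR n * h <= t / cfl).
  { apply Rmult_le_reg_l with cfl; auto. replace (cfl * (t / cfl)) with t by (field; lra). lra. }
  assert (Hnj : (n <= j)%nat).
  { destruct (le_lt_dec n j) as [|Hlt]; auto. exfalso.
    assert (INR (S j) <= INR n) by (apply le_INR; lia). rewrite S_INR in *.
    assert ((INR j + 1) * h <= INR n * h) by (apply Rmult_le_compat_r; lra). lra. }
  pose proof (MM_ge_shifted_m0 h n j Hh Hnj).
  assert (m0 (rho - t / cfl - 1) <= m0 ((INR j - INR n) * h)) by (apply m0_mono; lra).
  pose proof (MM_range h n j Hh). lra.
Qed.

(** *** Consistency: [m] is a viscosity solution *)


Lemma grid_touching s t0 rho0 p1 p2 eps r delta : Rabs s = 1 -> 0 < eps -> 0 < delta ->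
  0 < r -> r <= t0 -> r <= rho0 ->
  (forall t rho, Rabs (t - t0) <= r -> Rabs (rho - rho0) <= r ->
     s * mlim t rho <= s * mlim t0 rho0 + p1 * (t - t0) + p2 * (rho - rho0)
                       + eps * (Rabs (t - t0) + Rabs (rho - rho0))) ->
  exists h n j, 0 < h /\ Rabs (MM h (S n) (S j) - mlim t0 rho0) <= delta /\
    s * MM h n (S j) <= s * MM h (S n) (S j) - p1 * (cfl * h) + 2 * eps * (cfl * h) /\
    s * MM h n j <= s * MM h (S n) (S j) - p1 * (cfl * h) - p2 * h + 2 * eps * (cfl * h + h).
Proof.
  intros Hs He Hd Hr Hrt Hrr Htouch. pose proof Klip_pos. pose proof cfl_pos.
  set (B := Rmin (eps * r / 4) (eps * (delta / 2 / (Klip + 1)))).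
  assert (HB : 0 < B) by (unfold B; apply Rmin_glb_lt; repeat apply Rmult_lt_0_compat; try nra;
    apply Rinv_0_lt_compat; lra).
  assert (HB1 : B <= eps * r / 4) by apply Rmin_l.
  assert (HB2 : B <= eps * (delta / 2 / (Klip + 1))) by apply Rmin_r.
  set (eta := Rmin (B / 4) (delta / 2)).
  assert (Heta : 0 < eta) by (unfold eta; apply Rmin_glb_lt; lra).
  assert (Heta1 : eta <= B / 4) by apply Rmin_l. assert (Heta2 : eta <= delta / 2) by apply Rmin_r.
  destruct (mhh_converges eta (t0 + r) Heta ltac:(lra)) as [d1 [Hd1 Hap]].
  set (C := (Klip + Rabs p1 + 2 * eps) * cfl + (Klip + Rabs p2 + 2 * eps)).
  assert (HC : 0 <= C) by (unfold C; pose proof (Rabs_pos p1); pose proof (Rabs_pos p2); nra).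
  destruct (small_mesh cfl d1 r C (B / 4) ltac:(lra) Hd1 Hr HC ltac:(lra))
    as [h [[Hh Hhd] [Hch [Hhr HCh]]]].
  assert (Hsmall : (Klip + Rabs p1 + 2 * eps) * (cfl * h) + (Klip + Rabs p2 + 2 * eps) * h
                   + 2 * eta <= eps * r / 4) by (unfold C in HCh; nra).
  assert (Hlip : forall n j, Rabs (s * mlim (INR n * (cfl * h)) (INR j * h) - s * mlim t0 rho0)
     <= Klip * (Rabs (INR n * (cfl * h) - t0) + Rabs (INR j * h - rho0))).
  { intros n j. rewrite Rabs_sign_diff by auto.
    apply mlim_lipschitz; try lra; apply Rmult_le_pos; try apply pos_INR; nra. }
  assert (Happ : forall n j, Rabs (INR n * (cfl * h) - t0) <= r -> Rabs (INR j * h - rho0) <= r ->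
     Rabs (s * MM h n j - s * mlim (INR n * (cfl * h)) (INR j * h)) <= eta).
  { intros n j Bn Bj. rewrite Rabs_sign_diff by auto. apply Rabs_le_bounds in Bn.
    rewrite <- mhh_grid by auto. apply Hap; [lra|split; [|lra]|].
    - apply Rmult_le_pos; [apply pos_INR|nra].
    - apply Rmult_le_pos; [apply pos_INR|lra]. }
  destruct (discrete_touching (fun t rho => s * mlim t rho) (fun n j => s * MM h n j)
    Klip (cfl * h) h t0 rho0 p1 p2 eps r eta ltac:(nra) Hh He ltac:(lra) Hrt Hrr
    Hch Hhr Hsmall Hlip Htouch Happ)
    as [n [j [d [Hd0 [Hdist [Hval [H1 H2]]]]]]].
  exists h, n, j. split; [auto|]. split; [|split; lra].
  rewrite Rabs_sign_diff in Hval by auto.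
  (* [eps d <= B] forces [Klip d <= delta / 2] *)
  assert (Hd' : d <= delta / 2 / (Klip + 1)) by (apply Rmult_le_reg_l with eps; unfold C in HCh; nra).
  pose proof (mul_div_succ_le Klip (delta / 2) ltac:(lra) ltac:(lra)).
  assert (Klip * d <= Klip * (delta / 2 / (Klip + 1))) by (apply Rmult_le_compat_l; lra).
  lra.
Qed.


Lemma subsolution_approx t0 rho0 p1 p2 eps zeta : 0 < t0 -> 0 < rho0 ->
  superdiff mlim t0 rho0 p1 p2 -> 0 < eps -> 0 < zeta ->
  p1 + HH (p2 - 2 * eps) * mlim t0 rho0 <= 2 * eps + zeta.
Proof.
  intros Ht0 Hr0 Hsd He Hz. pose proof cfl_pos. pose proof supH_pos.
  destruct (superdiff_box mlim t0 rho0 p1 p2 eps Ht0 Hr0 He Hsd) as [r [Hr [Hrt [Hrr Hbox]]]].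
  destruct (grid_touching 1 t0 rho0 p1 p2 eps r (zeta / (supH + 1)) Rabs_R1 He)
    as [h [n [j [Hh [Hclose [H1 H2]]]]]]; try lra.
  { apply Rmult_lt_0_compat; [lra|apply Rinv_0_lt_compat; lra]. }
  { intros t rho Bt Brho. rewrite !Rmult_1_l. auto. }
  rewrite !Rmult_1_l in H1, H2.
  set (A := MM h (S n) (S j)) in *. set (tau := cfl * h) in *.
  assert (Htau : 0 < tau) by (unfold tau; nra).
  pose proof (scheme_sub_ineq h n j (A - p1 * tau + 2 * eps * tau)
    (A - p1 * tau - p2 * h + 2 * eps * (tau + h)) Hh H1 H2) as Hs.
  fold A in Hs. unfold denom in Hs. fold tau in Hs.
  replace ((A - p1 * tau + 2 * eps * tau - (A - p1 * tau - p2 * h + 2 * eps * (tau + h))) / h)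
    with (p2 - 2 * eps) in Hs by (field; lra).
  assert (Hdisc : A * HH (p2 - 2 * eps) <= - p1 + 2 * eps).
  { apply Rmult_le_reg_l with tau; auto. nra. }
  pose proof (HH_nonneg (p2 - 2 * eps)) as HH0. pose proof (HH_le (p2 - 2 * eps)) as HH1.
  rewrite Rabs_minus_sym in Hclose.
  pose proof (mult_close_le _ _ _ _ _ (conj HH0 HH1) Hclose).
  pose proof (mul_div_succ_le supH zeta ltac:(lra) ltac:(lra)).
  lra.
Qed.

Lemma supersolution_approx t0 rho0 p1 p2 eps zeta : 0 < t0 -> 0 < rho0 ->
  subdiff mlim t0 rho0 p1 p2 -> 0 < eps -> 0 < zeta ->
  - (2 * eps + zeta) <= p1 + HH (p2 + 2 * eps) * mlim t0 rho0.
Proof.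
  intros Ht0 Hr0 Hsd He Hz. pose proof cfl_pos. pose proof supH_pos.
  destruct (subdiff_box mlim t0 rho0 p1 p2 eps Ht0 Hr0 He Hsd) as [r [Hr [Hrt [Hrr Hbox]]]].
  destruct (grid_touching (-1) t0 rho0 (- p1) (- p2) eps r (zeta / (supH + 1)))
    as [h [n [j [Hh [Hclose [H1 H2]]]]]]; try lra.
  { rewrite Rabs_left; lra. }
  { apply Rmult_lt_0_compat; [lra|apply Rinv_0_lt_compat; lra]. }
  { intros t rho Bt Brho. specialize (Hbox t rho Bt Brho). lra. }
  set (A := MM h (S n) (S j)) in *. set (tau := cfl * h) in *.
  assert (Htau : 0 < tau) by (unfold tau; nra).
  pose proof (scheme_super_ineq h n j (A - p1 * tau - 2 * eps * tau)
    (A - p1 * tau - p2 * h - 2 * eps * (tau + h)) Hh ltac:(lra) ltac:(lra)) as Hs.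
  fold A in Hs. unfold denom in Hs. fold tau in Hs.
  replace ((A - p1 * tau - 2 * eps * tau - (A - p1 * tau - p2 * h - 2 * eps * (tau + h))) / h)
    with (p2 + 2 * eps) in Hs by (field; lra).
  assert (Hdisc : - p1 - 2 * eps <= A * HH (p2 + 2 * eps)).
  { apply Rmult_le_reg_l with tau; auto. nra. }
  pose proof (HH_nonneg (p2 + 2 * eps)) as HH0. pose proof (HH_le (p2 + 2 * eps)) as HH1.
  pose proof (mult_close_le _ _ _ _ _ (conj HH0 HH1) Hclose).
  pose proof (mul_div_succ_le supH zeta ltac:(lra) ltac:(lra)).
  lra.
Qed.

(** Letting the errors tend to zero, using [H(p2) = (p2_+)^alpha] for
    [p2 <= Lm] and the Lipschitz continuity of [H]. *)
Lemma mlim_subsolution t0 rho0 p1 p2 : 0 < t0 -> 0 < rho0 -> superdiff mlim t0 rho0 p1 p2 ->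
  p1 + rpow (Rmax p2 0) alpha * mlim t0 rho0 <= 0.
Proof.
  intros Ht Hr Hs. pose proof (superdiff_slope mlim Lm t0 rho0 p1 p2 Ht Hr
    (fun rho rho' => mlim_lipschitz_r t0 rho rho' ltac:(lra)) Hs) as Hp2.
  rewrite <- (Hfun_eq alpha Lm Lm_pos p2 Hp2). fold HH.
  pose proof (mlim_range t0 rho0 ltac:(lra) ltac:(lra)). pose proof LipH_pos.
  set (C := 3 + 2 * LipH * Sm). assert (HC : 0 < C) by (unfold C; nra).
  apply Rle_plus_epsilon. intros e He.
  set (eps := e / C). assert (Heps : 0 < eps) by (apply Rmult_lt_0_compat; [lra|apply Rinv_0_lt_compat; lra]).
  pose proof (subsolution_approx t0 rho0 p1 p2 eps eps Ht Hr Hs Heps Heps).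
  pose proof (HH_lipschitz (p2 - 2 * eps) p2 ltac:(lra)) as [L1 L2].
  assert ((HH p2 - HH (p2 - 2 * eps)) * mlim t0 rho0 <= LipH * (p2 - (p2 - 2 * eps)) * Sm)
    by (apply Rmult_le_compat; lra).
  assert (e = eps * C) by (unfold eps; field; lra).
  unfold C in *. nra.
Qed.

Lemma mlim_supersolution t0 rho0 p1 p2 : 0 < t0 -> 0 < rho0 -> subdiff mlim t0 rho0 p1 p2 ->
  p1 + rpow (Rmax p2 0) alpha * mlim t0 rho0 >= 0.
Proof.
  intros Ht Hr Hs. pose proof (subdiff_slope mlim Lm t0 rho0 p1 p2 Ht Hr
    (fun rho rho' => mlim_lipschitz_r t0 rho rho' ltac:(lra)) Hs) as Hp2.
  rewrite <- (Hfun_eq alpha Lm Lm_pos p2 Hp2). fold HH.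
  pose proof (mlim_range t0 rho0 ltac:(lra) ltac:(lra)). pose proof LipH_pos.
  set (C := 3 + 2 * LipH * Sm). assert (HC : 0 < C) by (unfold C; nra).
  apply Rle_ge, Ropp_le_cancel. rewrite Ropp_0. apply Rle_plus_epsilon. intros e He.
  set (eps := e / C). assert (Heps : 0 < eps) by (apply Rmult_lt_0_compat; [lra|apply Rinv_0_lt_compat; lra]).
  pose proof (supersolution_approx t0 rho0 p1 p2 eps eps Ht Hr Hs Heps Heps).
  pose proof (HH_lipschitz p2 (p2 + 2 * eps) ltac:(lra)) as [L1 L2].
  assert ((HH (p2 + 2 * eps) - HH p2) * mlim t0 rho0 <= LipH * (p2 + 2 * eps - p2) * Sm)
    by (apply Rmult_le_compat; lra).
  assert (e = eps * C) by (unfold eps; field; lra).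
  unfold C in *. nra.
Qed.

Lemma mlim_unif_cont : unif_cont_quadrant mlim.
Proof.
  intros e He. pose proof Klip_pos.
  exists (e / (2 * Klip)). split; [apply Rmult_lt_0_compat; [lra|apply Rinv_0_lt_compat; lra]|].
  intros t rho s y Ht Hr Hs Hy H1 H2.
  pose proof (mlim_lipschitz s y t rho Hs Hy Ht Hr).
  assert (Hlt : Klip * (Rabs (s - t) + Rabs (y - rho)) < Klip * (2 * (e / (2 * Klip))))
    by (apply Rmult_lt_compat_l; lra).
  replace (Klip * (2 * (e / (2 * Klip)))) with e in Hlt by (field; lra). lra.
Qed.

Lemma mlim_cont : cont_quadrant mlim.
Proof.
  intros t rho Ht Hr e He. destruct (mlim_unif_cont e He) as [d [Hd Hc]].
  exists d. split; [exact Hd|]. intros s y Hs Hy H1 H2. apply Hc; auto.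
Qed.

Lemma mlim_tends_to_Sm t e : 0 <= t -> 0 < e ->
  exists R0, 0 <= R0 /\ forall rho, R0 <= rho -> Sm - e < mlim t rho <= Sm.
Proof.
  intros Ht He. pose proof cfl_pos.
  assert (Htc : 0 <= t / cfl) by (apply div_nonneg; lra).
  destruct (m0_tends_to_Sm e He) as [X [HX HXs]].
  exists (X + t / cfl + 1). split; [lra|]. intros rho Hr.
  pose proof (mlim_lower t rho Ht ltac:(lra)).
  pose proof (HXs (rho - t / cfl - 1) ltac:(lra)).
  pose proof (mlim_range t rho Ht ltac:(lra)). lra.
Qed.

Lemma mlim_sup t : 0 <= t -> is_lub (fun v => exists rho, 0 <= rho /\ v = Rabs (mlim t rho)) Sm.
Proof.
  intros Ht. split.
  - intros v [rho [Hr ->]]. pose proof (mlim_range t rho Ht Hr). rewrite Rabs_right; lra.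
  - intros b Hb. apply Rle_plus_epsilon. intros e He.
    destruct (mlim_tends_to_Sm t e Ht He) as [R0 [HR0 HR]].
    pose proof (HR R0 (Rle_refl _)) as Hclose. pose proof (mlim_range t R0 Ht HR0).
    assert (Hb0 : Rabs (mlim t R0) <= b) by (apply Hb; exists R0; auto).
    rewrite Rabs_right in Hb0 by lra. lra.
Qed.

Lemma scheme_convergence :
  (exists K, forall h t rho t' rho', 0 < h -> 0 <= t -> 0 <= rho -> 0 <= t' -> 0 <= rho' ->
     Rabs (mh m0 alpha Lm Sm diag h t rho - mh m0 alpha Lm Sm diag h t' rho')
       <= K * (Rabs (t - t') + Rabs (rho - rho'))) /\
  (exists m : R -> R -> R,
     visc_sol alpha m0 m /\ bounded_quadrant m /\ unif_cont_quadrant m /\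
     (forall T P, 0 < T -> 0 < P -> forall eps, 0 < eps -> exists delta, 0 < delta /\
        forall h t rho, 0 < h < delta -> 0 <= t <= T -> 0 <= rho <= P ->
          Rabs (mh m0 alpha Lm Sm diag h t rho - m t rho) < eps) /\
     (forall t, 0 <= t ->
        is_lub (fun v => exists rho, 0 <= rho /\ v = Rabs (m t rho)) Sm /\
        (forall eps, 0 < eps -> exists R0, forall rho, R0 <= rho -> Rabs (m t rho - Sm) < eps) /\
        (forall rho rho', 0 <= rho -> 0 <= rho' -> Rabs (m t rho - m t rho') <= Lm * Rabs (rho - rho')))).
Proof.
  split; [exists Klip; exact mhh_lipschitz|].
  exists mlim.
  assert (Hinit : forall rho, 0 <= rho -> mlim 0 rho = m0 rho) by exact mlim_initial.
  assert (Hbdry : forall t, 0 <= t -> mlim t 0 = 0) by exact mlim_boundary.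
  split; [|split; [|split; [exact mlim_unif_cont|split]]].
  - split; (split; [exact mlim_cont|split; [|split]]);
      solve [exact mlim_subsolution | exact mlim_supersolution
            | intros x Hx; rewrite ?Hinit, ?Hbdry by auto; lra].
  - exists Sm. intros t rho Ht Hr. pose proof (mlim_range t rho Ht Hr). rewrite Rabs_right; lra.
  - intros T P HT HP e He. destruct (mhh_converges (e / 2) T ltac:(lra) ltac:(lra)) as [d [Hd Hap]].
    exists d. split; auto. intros h t rho Hh Ht Hr. pose proof (Hap h t rho Hh Ht ltac:(lra)).
    unfold mhh in *. lra.
  - intros t Ht. split; [apply mlim_sup; auto|split; [|intros; apply mlim_lipschitz_r; auto]].
    intros e He. destruct (mlim_tends_to_Sm t e Ht He) as [R0 [HR0 HR]].
    exists R0. intros rho Hr. specialize (HR rho Hr). rewrite Rabs_left1; lra.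
Qed.
End Scheme.

Theorem mainTheorem12 (alpha : R) (m0 : R -> R) (Lm Sm : R) (diag : bool) :
  1 <= alpha ->
  (forall x, 0 <= x -> 0 <= m0 x) ->
  (forall x y, 0 <= x -> x <= y -> m0 x <= m0 y) ->
  m0 0 = 0 ->
  (* Sm = ||m0||_oo *)
  is_lub (fun v => exists x, 0 <= x /\ v = Rabs (m0 x)) Sm ->
  (* Lm = ||(m0)_rho||_oo, the best Lipschitz constant of m0 *)
  is_lub (fun q => exists x y, 0 <= x /\ x < y /\ q = Rabs (m0 y - m0 x) / (y - x)) Lm ->
  0 < Sm ->
  (* uniform Lipschitz continuity of the family {m^h} *)
  (exists K, forall h t rho t' rho', 0 < h -> 0 <= t -> 0 <= rho -> 0 <= t' -> 0 <= rho' ->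
     Rabs (mh m0 alpha Lm Sm diag h t rho - mh m0 alpha Lm Sm diag h t' rho')
       <= K * (Rabs (t - t') + Rabs (rho - rho'))) /\
  (exists m : R -> R -> R,
     visc_sol alpha m0 m /\ bounded_quadrant m /\ unif_cont_quadrant m /\
     (* uniform convergence on compacts *)
     (forall T P, 0 < T -> 0 < P -> forall eps, 0 < eps -> exists delta, 0 < delta /\
        forall h t rho, 0 < h < delta -> 0 <= t <= T -> 0 <= rho <= P ->
          Rabs (mh m0 alpha Lm Sm diag h t rho - m t rho) < eps) /\
     (forall t, 0 <= t ->
        is_lub (fun v => exists rho, 0 <= rho /\ v = Rabs (m t rho)) Sm /\
        (forall eps, 0 < eps -> exists R0, forall rho, R0 <= rho -> Rabs (m t rho - Sm) < eps) /\
        (forall rho rho', 0 <= rho -> 0 <= rho' -> Rabs (m t rho - m t rho') <= Lm * Rabs (rho - rho')))).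
Proof.
  intros Ha Hpos Hmono H0 HS HL HSpos.
  exact (scheme_convergence alpha m0 Lm Sm diag Ha Hpos Hmono H0 HS HL HSpos).
Qed.
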